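(* For every $m\in[0.5,0.547]$, the system $\dot x=y^3-x^3$, $\dot y=-x+my^5$ has neither limit cycles nor polycycles.
   Context: A polycycle is a simple closed curve formed by finitely many solutions of the system and admitting a Poincaré return map. *)

From Stdlib Require Import Reals Lra.
Open Scope R_scope.

Definition fP (m : R) (x y : R) : R := y ^ 3 - x ^ 3.
Definition fQ (m : R) (x y : R) : R := - x + m * y ^ 5.

Definition pdist (p q : R * R) : R :=
  sqrt ((fst p - fst q) ^ 2 + (snd p - snd q) ^ 2).

Definition is_equilibrium (f1 f2 : R -> R -> R) (p : R * R) : Prop :=
  f1 (fst p) (snd p) = 0 /\ f2 (fst p) (snd p) = 0.

Definition is_solution (f1 f2 : R -> R -> R) (I : R -> Prop)
  (x y : R -> R) : Prop :=
  forall t, I t ->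
    derivable_pt_lim x t (f1 (x t) (y t)) /\
    derivable_pt_lim y t (f2 (x t) (y t)).

Definition periodic_orbit (f1 f2 : R -> R -> R) (G : R * R -> Prop) : Prop :=
  exists (x y : R -> R) (T : R),
    is_solution f1 f2 (fun _ => True) x y /\
    0 < T /\
    (forall t, x (t + T) = x t /\ y (t + T) = y t) /\
    ~ is_equilibrium f1 f2 (x 0, y 0) /\
    (forall p, G p <-> exists t, p = (x t, y t)).

Definition near (G : R * R -> Prop) (eps : R) (p : R * R) : Prop :=
  exists q, G q /\ pdist p q < eps.

(* A limit cycle is an isolated periodic orbit: some eps-neighbourhood of it
   contains no other periodic orbit. *)
Definition limit_cycle (f1 f2 : R -> R -> R) (G : R * R -> Prop) : Prop :=
  periodic_orbit f1 f2 G /\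
  exists eps, 0 < eps /\
    forall G', periodic_orbit f1 f2 G' ->
      (forall p, G' p -> near G eps p) ->
      forall p, G' p <-> G p.

(* Polycycle: a simple closed curve C made of n >= 1 distinct equilibria
   p_0, ..., p_{n-1} and n pairwise distinct regular orbits gamma_i, with
   gamma_i going from p_i (t -> -oo) to p_{(i+1) mod n} (t -> +oo),
   which admits a Poincare (first) return map on one side: on a transversal
   segment {q + u v | 0 < u < s0} through a point q of gamma_0, every
   trajectory starting at q + s v (0 < s < s0) returns to the segment at a
   first positive time tau s, at q + Pm s v, and as s -> 0+ the return point
   tends to q and the trajectory stays arbitrarily close to C. *)
Definition polycycle (f1 f2 : R -> R -> R) (C : R * R -> Prop) : Prop :=
  exists (n : nat) (pts : nat -> R * R) (gx gy : nat -> R -> R),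
    (0 < n)%nat /\
    (forall i, (i < n)%nat -> is_equilibrium f1 f2 (pts i)) /\
    (forall i j, (i < n)%nat -> (j < n)%nat -> pts i = pts j -> i = j) /\
    (forall i, (i < n)%nat ->
       is_solution f1 f2 (fun _ => True) (gx i) (gy i) /\
       ~ is_equilibrium f1 f2 (gx i 0, gy i 0) /\
       (forall eps, 0 < eps -> exists M, forall t, t < M ->
          pdist (gx i t, gy i t) (pts i) < eps) /\
       (forall eps, 0 < eps -> exists M, forall t, M < t ->
          pdist (gx i t, gy i t) (pts ((i + 1) mod n)%nat) < eps)) /\
    (forall i j t s, (i < n)%nat -> (j < n)%nat ->
       (gx i t, gy i t) = (gx j s, gy j s) -> i = j) /\
    (forall p, C p <->
       (exists i, (i < n)%nat /\ p = pts i) \/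
       (exists i t, (i < n)%nat /\ p = (gx i t, gy i t))) /\
    (let q := (gx 0%nat 0, gy 0%nat 0) in
     exists (vx vy s0 : R) (tau Pm : R -> R) (sx sy : R -> R -> R),
       vx * f2 (fst q) (snd q) - vy * f1 (fst q) (snd q) <> 0 /\
       0 < s0 /\
       (forall s, 0 < s < s0 ->
          0 < tau s /\ 0 < Pm s < s0 /\
          is_solution f1 f2 (fun t => 0 <= t <= tau s) (sx s) (sy s) /\
          sx s 0 = fst q + s * vx /\ sy s 0 = snd q + s * vy /\
          sx s (tau s) = fst q + Pm s * vx /\
          sy s (tau s) = snd q + Pm s * vy /\
          (forall t u, 0 < t < tau s -> 0 < u < s0 ->
             ~ (sx s t = fst q + u * vx /\ sy s t = snd q + u * vy))) /\
       (forall eta, 0 < eta -> exists delta, 0 < delta /\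
          forall s, 0 < s < delta -> s < s0 ->
            Pm s < eta /\
            forall t, 0 <= t <= tau s -> near C eta (sx s t, sy s t))).

From Stdlib Require Import Reals Lra Lia.
From Coquelicot Require Import Coquelicot.
Open Scope R_scope.

(* An explicit polynomial Lyapunov function [lyap m] decreases along the flow.  Its
   derivative along solutions is a quadratic form in the field components (P, Q) with
   coefficients affine in m, so it is nonpositive on the whole interval once it is at the
   endpoints m = 1/2 and m = 547/1000; there Gram-matrix certificates write it as minus a
   sum of squares that vanishes only where P = Q = 0 or x = y = 0.  Hence [lyap m]
   strictly decreases along every non-constant solution.  A periodic orbit would bring it
   back to its initial value, and along a polycycle each edge leads from an equilibrium to
   one of strictly smaller value, which is impossible around a closed chain. *)

(** * Lyapunov functions *)

Lemma nonincreasing_of_deriv_nonpos (h dh : R -> R) :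
  (forall t, derivable_pt_lim h t (dh t)) -> (forall t, dh t <= 0) ->
  forall a b, a <= b -> h b <= h a.
Proof.
  intros Hd Hneg a b Hab.
  destruct (Req_dec a b) as [<- | Hne]; [lra |].
  destruct (MVT_cor2 h dh a b) as [c [Hc _]]; [lra | intros; apply Hd |].
  specialize (Hneg c). nra.
Qed.

Lemma decreases_right_of_deriv_neg (h : R -> R) (t l B : R) :
  derivable_pt_lim h t l -> l < 0 -> 0 < B ->
  exists s, 0 < s <= B /\ h (t + s) < h t.
Proof.
  intros Hd Hl HB.
  destruct (Hd (- l / 2)) as [del Hdel]; [lra |].
  pose proof (cond_pos del) as Hdel0.
  set (s := Rmin del B / 2).
  assert (Hs : 0 < s < del /\ s <= B).
  { unfold s, Rmin; destruct (Rle_dec del B); lra. }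
  exists s; split; [lra |].
  assert (Hquot : Rabs ((h (t + s) - h t) / s - l) < - l / 2).
  { apply Hdel; [lra | rewrite Rabs_right; lra]. }
  apply Rabs_def2 in Hquot.
  assert (Hdiff : h (t + s) - h t = (h (t + s) - h t) / s * s) by (field; lra).
  nra.
Qed.

Lemma Rabs_lt_of_pdist_lt (p q : R * R) (e : R) :
  pdist p q < e -> Rabs (fst p - fst q) < e /\ Rabs (snd p - snd q) < e.
Proof.
  unfold pdist. intros H.
  pose proof (pow2_ge_0 (fst p - fst q)); pose proof (pow2_ge_0 (snd p - snd q)).
  split; rewrite <- sqrt_Rsqr_abs; eapply Rle_lt_trans; try exact H;
    apply sqrt_le_1_alt; unfold Rsqr; lra.
Qed.

Lemma cyclic_nonincreasing_not_strict (n : nat) (W : nat -> R) :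
  (0 < n)%nat -> (forall i, (i < n)%nat -> W ((i + 1) mod n)%nat <= W i) ->
  ~ W (1 mod n)%nat < W 0%nat.
Proof.
  intros Hn Hstep Hlt.
  assert (Hchain : forall j, (1 <= j <= n)%nat -> W (j mod n)%nat <= W (1 mod n)%nat).
  { induction j as [| j IH]; intros Hj; [lia |].
    destruct (Nat.eq_dec j 0) as [-> | Hj0]; [lra |].
    replace (S j) with (j + 1)%nat by lia.
    pose proof (Hstep j ltac:(lia)) as Hj1.
    pose proof (IH ltac:(lia)) as Hj2.
    rewrite (Nat.mod_small j n) in Hj2 by lia. lra. }
  pose proof (Hchain n ltac:(lia)) as Hn1.
  rewrite Nat.Div0.mod_same in Hn1. lra.
Qed.

Section Lyapunov.

Variables f1 f2 V L : R -> R -> R.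

Hypothesis V_continuous : forall p eps, 0 < eps -> exists d, 0 < d /\
  forall q, pdist q p < d -> Rabs (V (fst q) (snd q) - V (fst p) (snd p)) < eps.
Hypothesis V_derive_solution : forall x y,
  is_solution f1 f2 (fun _ => True) x y ->
  forall t, derivable_pt_lim (fun s => V (x s) (y s)) t (L (x t) (y t)).
Hypothesis L_nonpos : forall x y, L x y <= 0.
Hypothesis L_eq0_equilibrium : forall x y, L x y = 0 -> is_equilibrium f1 f2 (x, y).

Lemma lyapunov_nonincreasing (x y : R -> R) :
  is_solution f1 f2 (fun _ => True) x y ->
  forall a b, a <= b -> V (x b) (y b) <= V (x a) (y a).
Proof.
  intros Hs.
  apply (nonincreasing_of_deriv_nonpos _ (fun t => L (x t) (y t))).
  - exact (V_derive_solution x y Hs).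
  - intros t; apply L_nonpos.
Qed.

Lemma lyapunov_decreasing_at_regular (x y : R -> R) (B : R) :
  is_solution f1 f2 (fun _ => True) x y ->
  ~ is_equilibrium f1 f2 (x 0, y 0) -> 0 < B ->
  exists s, 0 < s <= B /\ V (x s) (y s) < V (x 0) (y 0).
Proof.
  intros Hs Hreg HB.
  assert (HL : L (x 0) (y 0) < 0).
  { destruct (Rle_lt_or_eq_dec _ _ (L_nonpos (x 0) (y 0))) as [| Heq]; [assumption |].
    exfalso; apply Hreg, L_eq0_equilibrium, Heq. }
  destruct (decreases_right_of_deriv_neg _ 0 _ B (V_derive_solution x y Hs 0) HL HB)
    as [s [Hs0 Hlt]].
  rewrite Rplus_0_l in Hlt. eauto.
Qed.

Lemma lyapunov_no_periodic_orbit (G : R * R -> Prop) : ~ periodic_orbit f1 f2 G.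
Proof.
  intros [x [y [T [Hs [HT [Hper [Hreg _]]]]]]].
  destruct (lyapunov_decreasing_at_regular x y T Hs Hreg HT) as [s [[_ HsT] Hlt]].
  pose proof (lyapunov_nonincreasing x y Hs s T HsT) as Hmono.
  destruct (Hper 0) as [Hx Hy]. rewrite Rplus_0_l in Hx, Hy.
  rewrite Hx, Hy in Hmono. lra.
Qed.

Lemma lyapunov_le_alpha_limit (x y : R -> R) (p : R * R) :
  is_solution f1 f2 (fun _ => True) x y ->
  (forall eps, 0 < eps -> exists M, forall t, t < M -> pdist (x t, y t) p < eps) ->
  forall t, V (x t) (y t) <= V (fst p) (snd p).
Proof.
  intros Hs Hlim t. apply Rnot_lt_le. intros Hgt.
  destruct (V_continuous p (V (x t) (y t) - V (fst p) (snd p))) as [d [Hd Hc]]; [lra |].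
  destruct (Hlim d Hd) as [M HM].
  set (t1 := Rmin M t - 1).
  assert (Ht1 : t1 < M /\ t1 <= t).
  { unfold t1; pose proof (Rmin_l M t); pose proof (Rmin_r M t); lra. }
  pose proof (Rabs_def2 _ _ (Hc _ (HM t1 (proj1 Ht1)))) as Hclose.
  pose proof (lyapunov_nonincreasing x y Hs t1 t (proj2 Ht1)).
  simpl in Hclose. lra.
Qed.

Lemma lyapunov_ge_omega_limit (x y : R -> R) (p : R * R) :
  is_solution f1 f2 (fun _ => True) x y ->
  (forall eps, 0 < eps -> exists M, forall t, M < t -> pdist (x t, y t) p < eps) ->
  forall t, V (fst p) (snd p) <= V (x t) (y t).
Proof.
  intros Hs Hlim t. apply Rnot_lt_le. intros Hlt.
  destruct (V_continuous p (V (fst p) (snd p) - V (x t) (y t))) as [d [Hd Hc]]; [lra |].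
  destruct (Hlim d Hd) as [M HM].
  set (t1 := Rmax M t + 1).
  assert (Ht1 : M < t1 /\ t <= t1).
  { unfold t1; pose proof (Rmax_l M t); pose proof (Rmax_r M t); lra. }
  pose proof (Rabs_def2 _ _ (Hc _ (HM t1 (proj1 Ht1)))) as Hclose.
  pose proof (lyapunov_nonincreasing x y Hs t t1 (proj2 Ht1)).
  simpl in Hclose. lra.
Qed.

Lemma lyapunov_no_polycycle (C : R * R -> Prop) : ~ polycycle f1 f2 C.
Proof.
  intros [n [pts [gx [gy [Hn [_ [_ [Hedge _]]]]]]]].
  set (W k := V (fst (pts k)) (snd (pts k))).
  apply (cyclic_nonincreasing_not_strict n W Hn).
  - intros i Hi. destruct (Hedge i Hi) as [Hs [_ [Halpha Homega]]].
    pose proof (lyapunov_le_alpha_limit _ _ _ Hs Halpha 0).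
    pose proof (lyapunov_ge_omega_limit _ _ _ Hs Homega 0).
    unfold W; lra.
  - destruct (Hedge 0%nat Hn) as [Hs [Hreg [Halpha Homega]]].
    destruct (lyapunov_decreasing_at_regular _ _ 1 Hs Hreg) as [s [_ Hlt]]; [lra |].
    pose proof (lyapunov_le_alpha_limit _ _ _ Hs Halpha 0).
    pose proof (lyapunov_ge_omega_limit _ _ _ Hs Homega s).
    unfold W; simpl in *; lra.
Qed.

End Lyapunov.

(** * The Lyapunov function of the system *)

(* Every monomial is written [c * (x ^ i * y ^ j)], the shape differentiated by
   [derivable_pt_lim_monomial]. *)
Definition lyap (m x y : R) : R :=
  68413665099780000000 * (x ^ 0 * y ^ 4)
  + ((-128273770125530398680) + 274844588758119016300 * m) * (x ^ 0 * y ^ 8)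
  + (754946052513143585094 + (-1497119253191266841136) * m + 30318025152431016000 * m ^ 2) * (x ^ 0 * y ^ 10)
  + ((-652920290860976758620) + 1164234918622979427840 * m + 627443556778518480000 * m ^ 2) * (x ^ 0 * y ^ 12)
  + (352771605142014750120 * m + (-973633337725070880000) * m ^ 2) * (x ^ 0 * y ^ 14)
  + ((-116729619565165326720) + (-60640708256528400000) * m) * (x ^ 1 * y ^ 5)
  + (381133011499607283840 + (-785514381265373760000) * m) * (x ^ 1 * y ^ 7)
  + ((-2064610066115099899656) + 4026835895457636368640 * m + 119444852713174560000 * m ^ 2) * (x ^ 1 * y ^ 9)
  + (2380134907152402656256 + (-4546875762482411816640) * m + (-1732868116928282880000) * m ^ 2) * (x ^ 1 * y ^ 11)
  + ((-1546077722248281277440) * m + 3840796456417831680000 * m ^ 2) * (x ^ 1 * y ^ 13)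
  + 136827330199560000000 * (x ^ 2 * y ^ 0)
  + (182645784596901451800 + (-268649025911940960000) * m) * (x ^ 2 * y ^ 4)
  + ((-503067220172159745375) + 1524704960150204774760 * m) * (x ^ 2 * y ^ 6)
  + (3317874320773816234200 + (-6419827534306724196120) * m + (-179826046519719600000) * m ^ 2) * (x ^ 2 * y ^ 8)
  + ((-4552877522080990712610) + 9528723297001202649264 * m + 1546356692348139672000 * m ^ 2) * (x ^ 2 * y ^ 10)
  + (2173566660613842574080 * m + (-4922957092766632920000) * m ^ 2) * (x ^ 2 * y ^ 12)
  + (-273445861893235471440) * (x ^ 3 * y ^ 1)
  + ((-144302265472757792400) + 479536124052585600000 * m) * (x ^ 3 * y ^ 3)
  + (280352925116047993584 + (-1058583779376291818080) * m) * (x ^ 3 * y ^ 5)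
  + ((-3461008155682343486220) + 5368520984279089291200 * m + 19369139241750480000 * m ^ 2) * (x ^ 3 * y ^ 7)
  + (6500930088141346057200 + (-14422073462288481195360) * m + (-795033423045781920000) * m ^ 2) * (x ^ 3 * y ^ 9)
  + ((-1296228088168894520640) * m + 2742294939797649600000 * m ^ 2) * (x ^ 3 * y ^ 11)
  + 87552051914042587560 * (x ^ 4 * y ^ 0)
  + (272323212968861243280 + (-67780342466960760000) * m) * (x ^ 4 * y ^ 2)
  + (776470434669707112720 + (-707326133981266800000) * m) * (x ^ 4 * y ^ 4)
  + (682265521058705388324 + 1237964926836710206440 * m + (-16149655883259360000) * m ^ 2) * (x ^ 4 * y ^ 6)
  + ((-7953231557132128979712) + 18349233897424196837070 * m + 1398124949737435920000 * m ^ 2) * (x ^ 4 * y ^ 8)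
  + (573808125439887778440 * m + (-2262827679325949736000) * m ^ 2) * (x ^ 4 * y ^ 10)
  + ((-193663693256919963600) + 96490364528748960000 * m) * (x ^ 5 * y ^ 1)
  + ((-1453270710072933387090) + (-423962957031829619040) * m) * (x ^ 5 * y ^ 3)
  + (2190055488286776541200 + (-5655868659885011874768) * m) * (x ^ 5 * y ^ 5)
  + (9503101541192228669700 + (-21555959666619705050880) * m + (-2302565247235693440000) * m ^ 2) * (x ^ 5 * y ^ 7)
  + ((-1453666127334122782080) * m + 5010553432010206080000 * m ^ 2) * (x ^ 5 * y ^ 9)
  + (64781844380481107880 + (-179826046519719600000) * m) * (x ^ 6 * y ^ 0)
  + (877426814300264942520 + 1874275996992482160000 * m) * (x ^ 6 * y ^ 2)
  + ((-1472659049529796458330) + 3289468756547413440000 * m) * (x ^ 6 * y ^ 4)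
  + ((-10623508376631778227600) + 23814010058262330947040 * m + 1379924003601102960000 * m ^ 2) * (x ^ 6 * y ^ 6)
  + (3348464466960277004340 * m + (-8195358823286494860000) * m ^ 2) * (x ^ 6 * y ^ 8)
  + ((-548877214770180135840) + (-325660690754118720000) * m) * (x ^ 7 * y ^ 1)
  + ((-993370589709638680800) + 1607420303799710400000 * m) * (x ^ 7 * y ^ 3)
  + (8766058392807049990656 + (-21308669123336378784000) * m) * (x ^ 7 * y ^ 5)
  + ((-3533056696604273810400) * m + 7842925931497113600000 * m ^ 2) * (x ^ 7 * y ^ 7)
  + (358311955952027897820 + (-496111153935376980000) * m) * (x ^ 8 * y ^ 0)
  + (799527001717141457760 + (-1065844145177491680000) * m) * (x ^ 8 * y ^ 2)
  + ((-5347570516141485201570) + 14044385848797133830000 * m) * (x ^ 8 * y ^ 4)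
  + (1390775559847339105440 * m + (-3123904775786154360000) * m ^ 2) * (x ^ 8 * y ^ 6)
  + (1223774622321113903040 + (-3003394832517839760000) * m) * (x ^ 9 * y ^ 1)
  + (4355907652283425318080 + (-10760384605619769120000) * m) * (x ^ 9 * y ^ 3)
  + ((-991296042740722935216) + 2131765728801436728000 * m) * (x ^ 10 * y ^ 0)
  + ((-3192961742827323667200) + 8571661637923303920000 * m) * (x ^ 10 * y ^ 2)
  + (397346497030247244480 + (-2703486792039153120000) * m) * (x ^ 11 * y ^ 1)
  + (419590927067983610940 + (-201604396576482900000) * m) * (x ^ 12 * y ^ 0).

Definition lyap_dx (m x y : R) : R :=
  ((-116729619565165326720) + (-60640708256528400000) * m) * (x ^ 0 * y ^ 5)
  + (381133011499607283840 + (-785514381265373760000) * m) * (x ^ 0 * y ^ 7)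
  + ((-2064610066115099899656) + 4026835895457636368640 * m + 119444852713174560000 * m ^ 2) * (x ^ 0 * y ^ 9)
  + (2380134907152402656256 + (-4546875762482411816640) * m + (-1732868116928282880000) * m ^ 2) * (x ^ 0 * y ^ 11)
  + ((-1546077722248281277440) * m + 3840796456417831680000 * m ^ 2) * (x ^ 0 * y ^ 13)
  + 273654660399120000000 * (x ^ 1 * y ^ 0)
  + (365291569193802903600 + (-537298051823881920000) * m) * (x ^ 1 * y ^ 4)
  + ((-1006134440344319490750) + 3049409920300409549520 * m) * (x ^ 1 * y ^ 6)
  + (6635748641547632468400 + (-12839655068613448392240) * m + (-359652093039439200000) * m ^ 2) * (x ^ 1 * y ^ 8)
  + ((-9105755044161981425220) + 19057446594002405298528 * m + 3092713384696279344000 * m ^ 2) * (x ^ 1 * y ^ 10)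
  + (4347133321227685148160 * m + (-9845914185533265840000) * m ^ 2) * (x ^ 1 * y ^ 12)
  + (-820337585679706414320) * (x ^ 2 * y ^ 1)
  + ((-432906796418273377200) + 1438608372157756800000 * m) * (x ^ 2 * y ^ 3)
  + (841058775348143980752 + (-3175751338128875454240) * m) * (x ^ 2 * y ^ 5)
  + ((-10383024467047030458660) + 16105562952837267873600 * m + 58107417725251440000 * m ^ 2) * (x ^ 2 * y ^ 7)
  + (19502790264424038171600 + (-43266220386865443586080) * m + (-2385100269137345760000) * m ^ 2) * (x ^ 2 * y ^ 9)
  + ((-3888684264506683561920) * m + 8226884819392948800000 * m ^ 2) * (x ^ 2 * y ^ 11)
  + 350208207656170350240 * (x ^ 3 * y ^ 0)
  + (1089292851875444973120 + (-271121369867843040000) * m) * (x ^ 3 * y ^ 2)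
  + (3105881738678828450880 + (-2829304535925067200000) * m) * (x ^ 3 * y ^ 4)
  + (2729062084234821553296 + 4951859707346840825760 * m + (-64598623533037440000) * m ^ 2) * (x ^ 3 * y ^ 6)
  + ((-31812926228528515918848) + 73396935589696787348280 * m + 5592499798949743680000 * m ^ 2) * (x ^ 3 * y ^ 8)
  + (2295232501759551113760 * m + (-9051310717303798944000) * m ^ 2) * (x ^ 3 * y ^ 10)
  + ((-968318466284599818000) + 482451822643744800000 * m) * (x ^ 4 * y ^ 1)
  + ((-7266353550364666935450) + (-2119814785159148095200) * m) * (x ^ 4 * y ^ 3)
  + (10950277441433882706000 + (-28279343299425059373840) * m) * (x ^ 4 * y ^ 5)
  + (47515507705961143348500 + (-107779798333098525254400) * m + (-11512826236178467200000) * m ^ 2) * (x ^ 4 * y ^ 7)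
  + ((-7268330636670613910400) * m + 25052767160051030400000 * m ^ 2) * (x ^ 4 * y ^ 9)
  + (388691066282886647280 + (-1078956279118317600000) * m) * (x ^ 5 * y ^ 0)
  + (5264560885801589655120 + 11245655981954892960000 * m) * (x ^ 5 * y ^ 2)
  + ((-8835954297178778749980) + 19736812539284480640000 * m) * (x ^ 5 * y ^ 4)
  + ((-63741050259790669365600) + 142884060349573985682240 * m + 8279544021606617760000 * m ^ 2) * (x ^ 5 * y ^ 6)
  + (20090786801761662026040 * m + (-49172152939718969160000) * m ^ 2) * (x ^ 5 * y ^ 8)
  + ((-3842140503391260950880) + (-2279624835278831040000) * m) * (x ^ 6 * y ^ 1)
  + ((-6953594127967470765600) + 11251942126597972800000 * m) * (x ^ 6 * y ^ 3)
  + (61362408749649349934592 + (-149160683863354651488000) * m) * (x ^ 6 * y ^ 5)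
  + ((-24731396876229916672800) * m + 54900481520479795200000 * m ^ 2) * (x ^ 6 * y ^ 7)
  + (2866495647616223182560 + (-3968889231483015840000) * m) * (x ^ 7 * y ^ 0)
  + (6396216013737131662080 + (-8526753161419933440000) * m) * (x ^ 7 * y ^ 2)
  + ((-42780564129131881612560) + 112355086790377070640000 * m) * (x ^ 7 * y ^ 4)
  + (11126204478778712843520 * m + (-24991238206289234880000) * m ^ 2) * (x ^ 7 * y ^ 6)
  + (11013971600890025127360 + (-27030553492660557840000) * m) * (x ^ 8 * y ^ 1)
  + (39203168870550827862720 + (-96843461450577922080000) * m) * (x ^ 8 * y ^ 3)
  + ((-9912960427407229352160) + 21317657288014367280000 * m) * (x ^ 9 * y ^ 0)
  + ((-31929617428273236672000) + 85716616379233039200000 * m) * (x ^ 9 * y ^ 2)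
  + (4370811467332719689280 + (-29738354712430684320000) * m) * (x ^ 10 * y ^ 1)
  + (5035091124815803331280 + (-2419252758917794800000) * m) * (x ^ 11 * y ^ 0).

Definition lyap_dy (m x y : R) : R :=
  273654660399120000000 * (x ^ 0 * y ^ 3)
  + ((-1026190161004243189440) + 2198756710064952130400 * m) * (x ^ 0 * y ^ 7)
  + (7549460525131435850940 + (-14971192531912668411360) * m + 303180251524310160000 * m ^ 2) * (x ^ 0 * y ^ 9)
  + ((-7835043490331721103440) + 13970819023475753134080 * m + 7529322681342221760000 * m ^ 2) * (x ^ 0 * y ^ 11)
  + (4938802471988206501680 * m + (-13630866728150992320000) * m ^ 2) * (x ^ 0 * y ^ 13)
  + ((-583648097825826633600) + (-303203541282642000000) * m) * (x ^ 1 * y ^ 4)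
  + (2667931080497250986880 + (-5498600668857616320000) * m) * (x ^ 1 * y ^ 6)
  + ((-18581490595035899096904) + 36241523059118727317760 * m + 1075003674418571040000 * m ^ 2) * (x ^ 1 * y ^ 8)
  + (26181483978676429218816 + (-50015633387306529983040) * m + (-19061549286211111680000) * m ^ 2) * (x ^ 1 * y ^ 10)
  + ((-20099010389227656606720) * m + 49930353933431811840000 * m ^ 2) * (x ^ 1 * y ^ 12)
  + (730583138387605807200 + (-1074596103647763840000) * m) * (x ^ 2 * y ^ 3)
  + ((-3018403321032958472250) + 9148229760901228648560 * m) * (x ^ 2 * y ^ 5)
  + (26542994566190529873600 + (-51358620274453793568960) * m + (-1438608372157756800000) * m ^ 2) * (x ^ 2 * y ^ 7)
  + ((-45528775220809907126100) + 95287232970012026492640 * m + 15463566923481396720000 * m ^ 2) * (x ^ 2 * y ^ 9)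
  + (26082799927366110888960 * m + (-59075485113199595040000) * m ^ 2) * (x ^ 2 * y ^ 11)
  + (-273445861893235471440) * (x ^ 3 * y ^ 0)
  + ((-432906796418273377200) + 1438608372157756800000 * m) * (x ^ 3 * y ^ 2)
  + (1401764625580239967920 + (-5292918896881459090400) * m) * (x ^ 3 * y ^ 4)
  + ((-24227057089776404403540) + 37579646889953625038400 * m + 135583974692253360000 * m ^ 2) * (x ^ 3 * y ^ 6)
  + (58508370793272114514800 + (-129798661160596330758240) * m + (-7155300807412037280000) * m ^ 2) * (x ^ 3 * y ^ 8)
  + ((-14258508969857839727040) * m + 30165244337774145600000 * m ^ 2) * (x ^ 3 * y ^ 10)
  + (544646425937722486560 + (-135560684933921520000) * m) * (x ^ 4 * y ^ 1)
  + (3105881738678828450880 + (-2829304535925067200000) * m) * (x ^ 4 * y ^ 3)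
  + (4093593126352232329944 + 7427789561020261238640 * m + (-96897935299556160000) * m ^ 2) * (x ^ 4 * y ^ 5)
  + ((-63625852457057031837696) + 146793871179393574696560 * m + 11184999597899487360000 * m ^ 2) * (x ^ 4 * y ^ 7)
  + (5738081254398877784400 * m + (-22628276793259497360000) * m ^ 2) * (x ^ 4 * y ^ 9)
  + ((-193663693256919963600) + 96490364528748960000 * m) * (x ^ 5 * y ^ 0)
  + ((-4359812130218800161270) + (-1271888871095488857120) * m) * (x ^ 5 * y ^ 2)
  + (10950277441433882706000 + (-28279343299425059373840) * m) * (x ^ 5 * y ^ 4)
  + (66521710788345600687900 + (-150891717666337935356160) * m + (-16117956730649854080000) * m ^ 2) * (x ^ 5 * y ^ 6)
  + ((-13082995146007105038720) * m + 45094980888091854720000 * m ^ 2) * (x ^ 5 * y ^ 8)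
  + (1754853628600529885040 + 3748551993984964320000 * m) * (x ^ 6 * y ^ 1)
  + ((-5890636198119185833320) + 13157875026189653760000 * m) * (x ^ 6 * y ^ 3)
  + ((-63741050259790669365600) + 142884060349573985682240 * m + 8279544021606617760000 * m ^ 2) * (x ^ 6 * y ^ 5)
  + (26787715735682216034720 * m + (-65562870586291958880000) * m ^ 2) * (x ^ 6 * y ^ 7)
  + ((-548877214770180135840) + (-325660690754118720000) * m) * (x ^ 7 * y ^ 0)
  + ((-2980111769128916042400) + 4822260911399131200000 * m) * (x ^ 7 * y ^ 2)
  + (43830291964035249953280 + (-106543345616681893920000) * m) * (x ^ 7 * y ^ 4)
  + ((-24731396876229916672800) * m + 54900481520479795200000 * m ^ 2) * (x ^ 7 * y ^ 6)
  + (1599054003434282915520 + (-2131688290354983360000) * m) * (x ^ 8 * y ^ 1)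
  + ((-21390282064565940806280) + 56177543395188535320000 * m) * (x ^ 8 * y ^ 3)
  + (8344653359084034632640 * m + (-18743428654716926160000) * m ^ 2) * (x ^ 8 * y ^ 5)
  + (1223774622321113903040 + (-3003394832517839760000) * m) * (x ^ 9 * y ^ 0)
  + (13067722956850275954240 + (-32281153816859307360000) * m) * (x ^ 9 * y ^ 2)
  + ((-6385923485654647334400) + 17143323275846607840000 * m) * (x ^ 10 * y ^ 1)
  + (397346497030247244480 + (-2703486792039153120000) * m) * (x ^ 11 * y ^ 0).

Lemma derivable_pt_lim_monomial (c : R) (i j : nat) (x y : R -> R) (t a b : R) :
  derivable_pt_lim x t a -> derivable_pt_lim y t b ->
  derivable_pt_lim (fun s => c * (x s ^ i * y s ^ j)) t
    (c * (INR i * x t ^ pred i * a * y t ^ j + x t ^ i * (INR j * y t ^ pred j * b))).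
Proof.
  intros Hx%is_derive_Reals Hy%is_derive_Reals. apply is_derive_Reals.
  pose proof (is_derive_mult _ _ t _ _ (is_derive_pow x i t a Hx) (is_derive_pow y j t b Hy)
    Rmult_comm) as H.
  apply (is_derive_scal _ _ c) in H.
  match type of H with is_derive _ _ ?l => replace (c * _) with l end; [exact H |].
  unfold scal, plus, mult; simpl. ring.
Qed.

Ltac derive_polynomial Hx Hy :=
  match goal with
  | |- derivable_pt_lim (fun s => _ + _) _ _ =>
      apply derivable_pt_lim_plus; derive_polynomial Hx Hy
  | |- _ => apply (derivable_pt_lim_monomial _ _ _ _ _ _ _ _ Hx Hy)
  end.

Lemma lyap_chain_rule (m : R) (x y : R -> R) (t a b : R) :
  derivable_pt_lim x t a -> derivable_pt_lim y t b ->
  derivable_pt_lim (fun s => lyap m (x s) (y s)) t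
    (lyap_dx m (x t) (y t) * a + lyap_dy m (x t) (y t) * b).
Proof.
  intros Hx Hy. unfold lyap.
  eapply (eq_ind _ (derivable_pt_lim _ t)); [derive_polynomial Hx Hy |].
  cbn [INR Nat.pred]. unfold lyap_dx, lyap_dy. ring.
Qed.

Lemma continuous2_plus (f g : R * R -> R) (q : R * R) :
  continuous f q -> continuous g q -> continuous (fun p => f p + g p) q.
Proof. exact (continuous_plus f g q). Qed.

Lemma continuous2_mult (f g : R * R -> R) (q : R * R) :
  continuous f q -> continuous g q -> continuous (fun p => f p * g p) q.
Proof. exact (continuous_mult f g q). Qed.

Lemma continuous2_pow (f : R * R -> R) (n : nat) (q : R * R) :
  continuous f q -> continuous (fun p => f p ^ n) q.
Proof.
  intros Hf; induction n as [| n IH]; simpl;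
    [apply continuous_const | apply (continuous2_mult f); assumption].
Qed.

Ltac continuity2 :=
  match goal with
  | |- continuous (fun p => @?f p + @?g p) _ => apply (continuous2_plus f g); continuity2
  | |- continuous (fun p => @?f p * @?g p) _ => apply (continuous2_mult f g); continuity2
  | |- continuous (fun p => @?f p ^ _) _ => apply (continuous2_pow f); continuity2
  | |- continuous (fun p => fst p) _ => apply continuous_fst
  | |- continuous (fun p => snd p) _ => apply continuous_snd
  | |- continuous (fun p => _) _ => apply continuous_const
  end.

Lemma lyap_continuous (m : R) (p : R * R) (eps : R) : 0 < eps -> exists d, 0 < d /\
  forall q, pdist q p < d -> Rabs (lyap m (fst q) (snd q) - lyap m (fst p) (snd p)) < eps.
Proof.
  intros He. destruct p as [px py].
  assert (Hc : continuous (fun q : R * R => lyap m (fst q) (snd q)) (px, py))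
    by (unfold lyap; continuity2).
  apply filterlim_locally with (eps := mkposreal eps He) in Hc.
  destruct Hc as [d Hd]. exists d. split; [apply cond_pos |].
  intros [qx qy] Hq. apply Rabs_lt_of_pdist_lt in Hq.
  apply (Hd (qx, qy)). split; apply Hq.
Qed.

Definition lie (m x y : R) : R := lyap_dx m x y * fP m x y + lyap_dy m x y * fQ m x y.

Lemma lyap_derive_solution (m : R) (x y : R -> R) :
  is_solution (fP m) (fQ m) (fun _ => True) x y ->
  forall t, derivable_pt_lim (fun s => lyap m (x s) (y s)) t (lie m (x t) (y t)).
Proof. intros Hs t. destruct (Hs t I). apply lyap_chain_rule; assumption. Qed.

(** * Sum-of-squares certificates *)

Definition lie_form (m x y w1 w2 : R) : R :=
  (((-116729619565165326720) + 213013952142591600000 * m) * (x ^ 0 * y ^ 2)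
     + (381133011499607283840 + (-785514381265373760000) * m) * (x ^ 0 * y ^ 4)
     + ((-2064610066115099899656) + 4163648239610568468240 * m) * (x ^ 0 * y ^ 6)
     + (2380134907152402656256 + (-5367400908532751088000) * m) * (x ^ 0 * y ^ 8)
     + (228479225040870804000 + (-417853199110707360000) * m) * (x ^ 1 * y ^ 1)
     + ((-185609294293980219390) + 496204217692420255200 * m) * (x ^ 1 * y ^ 3)
     + (5089670919299351190960 + (-8840613333186225858960) * m) * (x ^ 1 * y ^ 5)
     + ((-9105755044161981425220) + 20568548031049238220000 * m) * (x ^ 1 * y ^ 7)
     + ((-591152075427664230480) + 1078956279118317600000 * m) * (x ^ 2 * y ^ 0)
     + ((-670042661698688940720) + 267170254223574240000 * m) * (x ^ 2 * y ^ 2)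
     + ((-6035891145819345310500) + 7232211999614281680000 * m) * (x ^ 2 * y ^ 4)
     + (19502790264424038171600 + (-43942997155464847440000) * m) * (x ^ 2 * y ^ 6)
     + (4163791518777839588640 + (-5999919186327786720000) * m) * (x ^ 3 * y ^ 1)
     + ((-3224232246386961908280) + 16602553525106629080000 * m) * (x ^ 3 * y ^ 3)
     + ((-29432791321376113262592) + 64280359194702146496000 * m) * (x ^ 3 * y ^ 5)
     + ((-3702787358196757390560) + 3968889231483015840000 * m) * (x ^ 4 * y ^ 0)
     + (18335180862492785010720 + (-46373728359059861760000) * m) * (x ^ 4 * y ^ 2)
     + (38409752661799161923280 + (-82616732077946386320000) * m) * (x ^ 4 * y ^ 4)
     + ((-22140176079668737970880) + 52021791698949792720000 * m) * (x ^ 5 * y ^ 1)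
     + ((-44238259995366631194000) + 99262714209495716880000 * m) * (x ^ 5 * y ^ 3)
     + (9912960427407229352160 + (-21317657288014367280000) * m) * (x ^ 6 * y ^ 0)
     + (31929617428273236672000 + (-85716616379233039200000) * m) * (x ^ 6 * y ^ 2)
     + ((-4370811467332719689280) + 29738354712430684320000 * m) * (x ^ 7 * y ^ 1)
     + ((-5035091124815803331280) + 2419252758917794800000 * m) * (x ^ 8 * y ^ 0)) * w1 ^ 2
  + (0 * (x ^ 0 * y ^ 0) + ((-1163002505157175289040) + 2318201562778126690400 * m) * (x ^ 0 * y ^ 4)
     + (8369985671181775122300 + (-16467380069319633439440) * m) * (x ^ 0 * y ^ 6)
     + ((-9381121212580002380880) + 21355441888097172240000 * m) * (x ^ 0 * y ^ 8)
     + (8908332561928800 + (-23289758331840000) * m) * (x ^ 1 * y ^ 1)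
     + ((-1034140606715727292320) + 1671069919445166240000 * m) * (x ^ 1 * y ^ 3)
     + ((-15153789560094525516696) + 26083933107119871048000 * m) * (x ^ 1 * y ^ 5)
     + (30528617299904114366976 + (-69472532586145616928000) * m) * (x ^ 1 * y ^ 7)
     + ((-188460724421249280) + 407570770807200000 * m) * (x ^ 2 * y ^ 0)
     + (5620018459962582986310 + (-9855003309078747062880) * m) * (x ^ 2 * y ^ 2)
     + (7120760945562277120800 + (-4246273406577600866160) * m) * (x ^ 2 * y ^ 4)
     + ((-49417459485316590688020) + 111953470403404129500000 * m) * (x ^ 2 * y ^ 6)
     + ((-7323938908179428414880) + 12304806113131852320000 * m) * (x ^ 3 * y ^ 1)
     + (13154378849183032100640 + (-30913532628096998880000) * m) * (x ^ 3 * y ^ 3)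
     + (52968559804699944525120 + (-123798189312549591840000) * m) * (x ^ 3 * y ^ 5)
     + (4895310286446072292800 + (-7953883330852499040000) * m) * (x ^ 4 * y ^ 0)
     + ((-28402122190656200706720) + 49227783438714360480000 * m) * (x ^ 4 * y ^ 2)
     + ((-44712699115051216529280) + 114452789500886316480000 * m) * (x ^ 4 * y ^ 4)
     + (22810691857409055119520 + (-44489249208518194080000) * m) * (x ^ 5 * y ^ 1)
     + (41083722369297355587840 + (-102646209542868351360000) * m) * (x ^ 5 * y ^ 3)
     + ((-8732136270824614327680) + 21746823487234765920000 * m) * (x ^ 6 * y ^ 0)
     + ((-37799119833080192627040) + 87181635337339102560000 * m) * (x ^ 6 * y ^ 2)
     + (17512127964433360177920 + (-42134561482135842720000) * m) * (x ^ 7 * y ^ 1)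
     + ((-397346497030247244480) + 2703486792039153120000 * m) * (x ^ 8 * y ^ 0)) * (w1 * w2)
  + (((-236680579521317851920) + 303180251524310160000 * m) * (x ^ 0 * y ^ 4)
     + ((-3543826408203587425920) + 7529322681342221760000 * m) * (x ^ 0 * y ^ 6)
     + (4938802471988206501680 + (-13630866728150992320000) * m) * (x ^ 0 * y ^ 8)
     + ((-380563391455856706240) + 1075003674418571040000 * m) * (x ^ 1 * y ^ 3)
     + (9610985013305821104960 + (-19061549286211111680000) * m) * (x ^ 1 * y ^ 5)
     + ((-20099010389227656606720) + 49930353933431811840000 * m) * (x ^ 1 * y ^ 7)
     + (-208798505884528560) * (x ^ 2 * y ^ 0)
     + (432906796418273377200 + (-1438608372157756800000) * m) * (x ^ 2 * y ^ 2)
     + ((-8439352613999154207360) + 15463566923481396720000 * m) * (x ^ 2 * y ^ 4)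
     + (26082799927366110888960 + (-59075485113199595040000) * m) * (x ^ 2 * y ^ 6)
     + (275682251409421998960 + 135583974692253360000 * m) * (x ^ 3 * y ^ 1)
     + (2462862866328802697760 + (-7155300807412037280000) * m) * (x ^ 3 * y ^ 3)
     + ((-14258508969857839727040) + 30165244337774145600000 * m) * (x ^ 3 * y ^ 5)
     + ((-156356053674829137360) + (-96897935299556160000) * m) * (x ^ 4 * y ^ 0)
     + ((-2232769562054062471440) + 11184999597899487360000 * m) * (x ^ 4 * y ^ 2)
     + (5738081254398877784400 + (-22628276793259497360000) * m) * (x ^ 4 * y ^ 4)
     + (6308924520822627543840 + (-16117956730649854080000) * m) * (x ^ 5 * y ^ 1)
     + ((-13082995146007105038720) + 45094980888091854720000 * m) * (x ^ 5 * y ^ 3)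
     + ((-4143972062531114573760) + 8279544021606617760000 * m) * (x ^ 6 * y ^ 0)
     + (26787715735682216034720 + (-65562870586291958880000) * m) * (x ^ 6 * y ^ 2)
     + ((-24731396876229916672800) + 54900481520479795200000 * m) * (x ^ 7 * y ^ 1)
     + (8344653359084034632640 + (-18743428654716926160000) * m) * (x ^ 8 * y ^ 0)) * w2 ^ 2.

Lemma lie_eq_lie_form (m x y : R) : lie m x y = lie_form m x y (fP m x y) (fQ m x y).
Proof. unfold lie, lyap_dx, lyap_dy, lie_form, fP, fQ. ring. Qed.

Lemma lie_form_affine (m x y w1 w2 : R) :
  47 * lie_form m x y w1 w2 =
  (547 - 1000 * m) * lie_form (1/2) x y w1 w2 + (1000 * m - 500) * lie_form (547/1000) x y w1 w2.
Proof. unfold lie_form. field. Qed.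

Lemma nonneg_of_scaled_eq_sum (c q r n : R) :
  c * q = r + n -> 0 < c -> 0 <= r -> 0 <= n -> 0 <= q.
Proof. intros; nra. Qed.

Lemma nonpos_of_scaled_eq_sum_eq0 (c q r n : R) :
  q = 0 -> c * q = r + n -> 0 <= r -> n <= 0.
Proof. intros -> E Hr. rewrite Rmult_0_r in E. lra. Qed.

Lemma nonpos_of_scaled_eq_neg_sum (c q a g b h : R) :
  c * q = - (a * g + b * h) -> 0 < c -> 0 <= a -> 0 <= b -> 0 <= g -> 0 <= h -> q <= 0.
Proof. intros; nra. Qed.

Lemma eq0_of_scaled_eq_neg_sum_eq0 (c q a g b h : R) :
  q = 0 -> c * q = - (a * g + b * h) -> 0 < a -> 0 < b -> 0 <= g -> 0 <= h ->
  g = 0 /\ h = 0.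
Proof. intros -> E Ha Hb Hg Hh. rewrite Rmult_0_r in E. split; nra. Qed.

Lemma eq0_of_sq_nonpos (z : R) : z ^ 2 <= 0 -> z = 0.
Proof.
  intros Hz. apply Rsqr_0_uniq. pose proof (pow2_ge_0 z). unfold Rsqr. simpl in *. lra.
Qed.

Ltac weighted_squares_nonneg :=
  repeat apply Rplus_le_le_0_compat; (apply Rmult_le_pos; [lra | apply pow2_ge_0]).

Lemma origin_or_zero_of_products (x y w1 w2 : R) :
  w1 * y = 0 -> w1 * x = 0 -> w2 * x = 0 -> w2 * y ^ 2 = 0 ->
  (x = 0 /\ y = 0) \/ (w1 = 0 /\ w2 = 0).
Proof.
  intros H1y H1x H2x H2y.
  destruct (Req_dec x 0) as [Hx | Hx]; [destruct (Req_dec y 0) as [Hy | Hy] |].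
  - left; split; assumption.
  - pose proof (pow_nonzero y 2 Hy) as Hy2.
    right; split; [apply (Rmult_eq_reg_r y) | apply (Rmult_eq_reg_r (y ^ 2))]; lra.
  - right; split; apply (Rmult_eq_reg_r x); lra.
Qed.

(* Each Gram form comes with a decomposition [10 ^ 24 * gram = gram_sos + gram_diag]:
   [gram_sos] is a nonnegative combination of squares of linear forms and [gram_diag] a
   positive diagonal remainder, whose variables must therefore vanish with the form. *)
Definition gram_lo_even (z0 z1 z2 z3 z4 z5 z6 z7 z8 z9 z10 z11 z12 z13 z14 z15 : R) : R :=
  1121946544672208640 * (z0 * z0) + (-4030605850314418830) * (z0 * z1)
  + (-1856298769624206720) * (z0 * z2) + (-2049331604420782032) * (z0 * z3)
  + 4887168880931595720 * (z0 * z4) + 2157827466114700380 * (z0 * z5)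
  + (-7674794866858686840) * (z0 * z6) + 5524550066261706480 * (z0 * z7)
  + (-696888737936795360) * (z0 * z8) + 2859370036025690880 * (z0 * z9)
  + (-1325869065151353450) * (z0 * z10) + (-873488577346601580) * (z0 * z11)
  + (-374676322866943032) * (z0 * z12) + 4282719015812668200 * (z0 * z13)
  + (-8218583079173026560) * (z0 * z14) + 4571150737065232320 * (z0 * z15)
  + 19868160953836475280 * (z1 * z1) + (-30277198206075300480) * (z1 * z2)
  + (-10178078541301550880) * (z1 * z3) + (-179226335242674720) * (z1 * z4)
  + (-9759829416299202240) * (z1 * z5) + 41597313336936957600 * (z1 * z6)
  + (-26105372224837345440) * (z1 * z7) + 1908211414281812640 * (z1 * z8)
  + (-16741551654864036000) * (z1 * z9) + 12656865744955111680 * (z1 * z10)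
  + 34954515306496225440 * (z1 * z11) + (-35045263849836240000) * (z1 * z12)
  + (-34352812755113973120) * (z1 * z13) + 36840170589833651040 * (z1 * z14)
  + (-1624216101183355680) * (z1 * z15) + 38629336404402263520 * (z2 * z2)
  + 22958030659040436960 * (z2 * z3) + (-44081946269931810240) * (z2 * z4)
  + 862326591994707840 * (z2 * z5) + (-14376930846553154880) * (z2 * z6)
  + 1199783545343903520 * (z2 * z7) + 2256125469122004480 * (z2 * z8)
  + 11788390656760798080 * (z2 * z9) + (-17848350840068068320) * (z2 * z10)
  + (-52974395216678295360) * (z2 * z11) + 77554615767927217920 * (z2 * z12)
  + 44123623292466637920 * (z2 * z13) + (-37287590137146629280) * (z2 * z14)
  + (-26323377448232985120) * (z2 * z15) + 6458841427956869952 * (z3 * z3)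
  + (-25074871731119950740) * (z3 * z4) + 13189126475690605440 * (z3 * z5)
  + (-9375527738716723584) * (z3 * z6) + 637009825013321760 * (z3 * z7)
  + 2705873992268166720 * (z3 * z8) + 1128447015573477600 * (z3 * z9)
  + (-4359004328420501760) * (z3 * z10) + (-27587228329118802960) * (z3 * z11)
  + 36889581188326138272 * (z3 * z12) + 4149021895441523100 * (z3 * z13)
  + (-1673252687351044800) * (z3 * z14) + (-11418246527592864960) * (z3 * z15)
  + 39336582318104831760 * (z4 * z4) + (-48228478133090935680) * (z4 * z5)
  + 3546843875872577280 * (z4 * z6) + 21008765223259173360 * (z4 * z7)
  + (-8672488824181422240) * (z4 * z8) + 6878117748625643520 * (z4 * z9)
  + 3605359393681325280 * (z4 * z10) + 52634865474837565920 * (z4 * z11)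
  + (-93687023793621978720) * (z4 * z12) + 24803755651717922880 * (z4 * z13)
  + (-14986086120601596000) * (z4 * z14) + 29345910639660014400 * (z4 * z15)
  + 57488771345370084720 * (z5 * z5) + (-135755512231370391360) * (z5 * z6)
  + 62898124366424627280 * (z5 * z7) + 10475931260607452640 * (z5 * z8)
  + (-10847810476771107840) * (z5 * z9) + 430080322234923360 * (z5 * z10)
  + (-50021055897255162720) * (z5 * z11) + 95761885073647272480 * (z5 * z12)
  + (-87072685847862755040) * (z5 * z13) + 60845669774727757920 * (z5 * z14)
  + (-21161423766684801600) * (z5 * z15) + 169627210981304796720 * (z6 * z6)
  + (-223369486997502605760) * (z6 * z7) + (-13917738326403431520) * (z6 * z8)
  + 6640958139532516800 * (z6 * z9) + 17008603668776079360 * (z6 * z10)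
  + 71118991782727368480 * (z6 * z11) + (-118493702310010547520) * (z6 * z12)
  + 76814653566207997440 * (z6 * z13) + (-71722697253326159040) * (z6 * z14)
  + 39665358014035834080 * (z6 * z15) + 81392866922487360240 * (z7 * z7)
  + 7520810274671934240 * (z7 * z8) + (-2948238862348459680) * (z7 * z9)
  + (-12743724898653708960) * (z7 * z10) + (-34278122500143762240) * (z7 * z11)
  + 50852966064868487520 * (z7 * z12) + (-30343492503166883040) * (z7 * z13)
  + 35976190424997382560 * (z7 * z14) + (-20306316999772964160) * (z7 * z15)
  + 1810435186365165360 * (z8 * z8) + (-3338184276760956480) * (z8 * z9)
  + (-787356859924514880) * (z8 * z10) + (-8911523258820262080) * (z8 * z11)
  + 14311568139794845920 * (z8 * z12) + (-9498949188345096480) * (z8 * z13)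
  + 8371957782667358880 * (z8 * z14) + (-4631343117473872800) * (z8 * z15)
  + 6880522416173406000 * (z9 * z9) + (-7310547689888635920) * (z9 * z10)
  + (-7512961626114104160) * (z9 * z11) + (-662791587486668640) * (z9 * z12)
  + 38846245568625855360 * (z9 * z13) + (-44338180191098713920) * (z9 * z14)
  + 12414500874874818720 * (z9 * z15) + 4360441575237557040 * (z10 * z10)
  + 16265602153594553760 * (z10 * z11) + (-17638125836485714560) * (z10 * z12)
  + (-24165348441204690720) * (z10 * z13) + 27447690531702561120 * (z10 * z14)
  + (-2381797005080613120) * (z10 * z15) + 39928316852921056560 * (z11 * z11)
  + (-103535459095494666240) * (z11 * z12) + (-14377000715828150400) * (z11 * z13)
  + 19060000517282044320 * (z11 * z14) + 20158124267507466240 * (z11 * z15)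
  + 87886418359098078720 * (z12 * z12) + (-36594323900882748000) * (z12 * z13)
  + 10997307435503188800 * (z12 * z14) + (-43048824235210553760) * (z12 * z15)
  + 87484081961475959760 * (z13 * z13) + (-158323416148594176480) * (z13 * z14)
  + 32865738395867657280 * (z13 * z15) + 94660209635276244960 * (z14 * z14)
  + (-57847742212978317600) * (z14 * z15) + 21852361027115498880 * (z15 * z15).

Definition gram_lo_even_sos (z0 z1 z2 z3 z4 z5 z6 z7 z8 z9 z10 z11 z12 z13 z14 z15 : R) : R :=
  112078206498448990800000000 *
      (100000000 * z0 + (-179812205) * z1 + (-82812656) * z2 + (-91424180) * z3 + 218024943 * z4
        + 96264365 * z5 + (-342385695) * z6 + 246459605 * z7 + (-31089396) * z8 + 127561376 * z9
        + (-59149281) * z10 + (-38967816) * z11 + (-16714950) * z12 + 191059403 * z13 + (-366645015) * z14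
        + 203926834 * z15) ^ 2
  + 1624323583418057121600000000 *
      (100000000 * z1 + (-103473995) * z2 + (-42673230) * z3 + 26498722 * z4 + (-18099202) * z5
        + 85565142 * z6 + (-49779358) * z7 + 2016595 * z8 + (-35707341) * z9 + 31621751 * z10
        + 102762395 * z11 + (-109950314) * z12 + (-82040184) * z13 + 67911823 * z14 + 20301592 * z15) ^ 2
  + 2046812929158894296400000000 *
      (100000000 * z2 + 16895284 * z3 + (-76038198) * z4 + (-8390545) * z5 + 19616186 * z6
        + (-26769779) * z7 + 5757470 * z8 + 5260056 * z9 + (-20316147) * z10 + (-46790119) * z11
        + 98407829 * z12 + 49082179 * z13 + (-51946672) * z14 + (-38385276) * z15) ^ 2
  + 197871993491914581840000000 *
      (100000000 * z3 + (-294995388) * z4 + 334385883 * z5 + (-148756300) * z6 + 16130026 * z7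
        + 49276972 * z8 + (-39705388) * z9 + 5500722 * z10 + (-275523734) * z11 + 366358493 * z12
        + (-169388789) * z13 + 96537046 * z14 + (-44722211) * z15) ^ 2
  + 381367283212419744240000000 *
      (100000000 * z4 + (-196000783) * z5 + 21681191 * z6 + 89146415 * z7 + 2860325 * z8 + 9437621 * z9
        + (-25011996) * z10 + (-13593640) * z11 + (-131157116) * z12 + 236409865 * z13 + (-102437530) * z14
        + 6066995 * z15) ^ 2
  + 1899723589951444377120000000 *
      (100000000 * z5 + (-262501955) * z6 + 170883082 * z7 + 14133220 * z8 + (-23303542) * z9
        + (-4209101) * z10 + (-27153775) * z11 + 65666404 * z12 + (-96265219) * z13 + 112850987 * z14
        + (-49642565) * z15) ^ 2
  + 834478439890928873040000000 *
      (100000000 * z6 + (-111205125) * z7 + (-2259653) * z8 + 1190380 * z9 + 11084478 * z10 + 1458193 * z11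
        + (-47253325) * z12 + 2689504 * z13 + 32129841 * z14 + 3060212 * z15) ^ 2
  + 21620732735626184160000000 *
      (100000000 * z7 + 21005865 * z8 + (-53346712) * z9 + (-30755667) * z10 + (-11786548) * z11
        + (-10519532) * z12 + (-180414718) * z13 + 130408845 * z14 + 40740815 * z15) ^ 2
  + 74962355039241349680000000 *
      (100000000 * z8 + (-18759735) * z9 + (-45678503) * z10 + (-125164613) * z11 + 136265202 * z12
        + (-43757148) * z13 + (-74705563) * z14 + 70745977 * z15) ^ 2
  + 146129999127123931920000000 *
      (100000000 * z9 + (-63001643) * z10 + (-16716005) * z11 + (-71523776) * z12 + 320885343 * z13
        + (-430610410) * z14 + 168004799 * z15) ^ 2
  + 36048609928530239040000000 *
      (100000000 * z10 + (-57964) * z11 + (-21308995) * z12 + (-64345919) * z13 + 286944812 * z14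
        + (-272021508) * z15) ^ 2
  + 41051273307967802880000000 *
      (100000000 * z11 + (-54565020) * z12 + (-148710015) * z13 + 100667815 * z14 + 4268588 * z15) ^ 2
  + 294189787629624126240000000 *
      (100000000 * z12 + (-97927764) * z13 + (-26895832) * z14 + 31175631 * z15) ^ 2
  + 315317976911169392160000000 * (100000000 * z13 + (-96542610) * z14 + 9599225 * z15) ^ 2
  + 125875408680605984400000000 * (100000000 * z14 + (-81410412) * z15) ^ 2
  + 5261383482306391440000000 * (100000000 * z15) ^ 2
  + 19135934796577271400000000000000000 * (z0 + z1) ^ 2
  + 11173198720866756480000000000000000 * (z0 + z2) ^ 2
  + 10288746009571754400000000000000000 * (z0 + z3) ^ 2
  + 17870859220757752440000000000000000 * (z0 - z4) ^ 2
  + 4833856368425284200000000000000000 * (z0 - z5) ^ 2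
  + 29203153993710660600000000000000000 * (z0 + z6) ^ 2
  + 17140763898521663400000000000000000 * (z0 - z7) ^ 2
  + 5511607726078155680000000000000000 * (z0 + z8) ^ 2
  + 6042584073225934080000000000000000 * (z0 - z9) ^ 2
  + 439601817099561480000000000000000 * (z0 + z10) ^ 2
  + 4170855665888009280000000000000000 * (z0 + z11) ^ 2
  + 337653479877246000000000000000000 * (z0 + z12) ^ 2
  + 14384104360820049240000000000000000 * (z0 - z13) ^ 2
  + 30693179490860086200000000000000000 * (z0 + z14) ^ 2
  + 12630076700433912720000000000000000 * (z0 - z15) ^ 2
  + 37245209163497881261331616000000000 * (z1 + z2) ^ 2
  + 75024345561334508643824520000000000 * (z1 - z3) ^ 2
  + 20447221515659285850805302000000000 * (z1 + z4) ^ 2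
  + 61034775477053186882463390000000000 * (z1 - z5) ^ 2
  + 130616556143542637864926230000000000 * (z1 - z6) ^ 2
  + 80320613457991300642217970000000000 * (z1 + z7) ^ 2
  + 87480342374901630951540744000000000 * (z1 - z8) ^ 2
  + 52378118650202714738905536000000000 * (z1 - z9) ^ 2
  + 81128977386257733047481366000000000 * (z1 + z10) ^ 2
  + 58628805823224305016972624000000000 * (z1 - z11) ^ 2
  + 963189529407416885874300000000000 * (z1 - z12) ^ 2
  + 37633407141573970939470258000000000 * (z1 - z13) ^ 2
  + 56663497743107986141120710000000000 * (z1 - z14) ^ 2
  + 27439021281817967690392524000000000 * (z1 - z15) ^ 2
  + 33685131402104804192595024000000000 * (z2 - z3) ^ 2
  + 68298372154123595454200630400000000 * (z2 + z4) ^ 2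
  + 109896093951899314988296368000000000 * (z2 + z5) ^ 2
  + 166878479650060786851170928000000000 * (z2 + z6) ^ 2
  + 26558232585089009689252368000000000 * (z2 + z7) ^ 2
  + 675416730793170384839620800000000 * (z2 - z8) ^ 2
  + 128473483683899982746411092800000000 * (z2 + z9) ^ 2
  + 163537739041865528385362116800000000 * (z2 - z10) ^ 2
  + 161522500851395296011562363200000000 * (z2 + z11) ^ 2
  + 47765588945315199140630448000000000 * (z2 - z12) ^ 2
  + 19825268364088187672358086400000000 * (z2 + z13) ^ 2
  + 79312359275396207767150344000000000 * (z2 + z14) ^ 2
  + 32402610348461590728998707200000000 * (z2 + z15) ^ 2
  + 59634655159294607754014452800000000 * (z3 + z4) ^ 2
  + 51789619453334180156955216000000000 * (z3 + z5) ^ 2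
  + 54354601471612684803618657600000000 * (z3 - z6) ^ 2
  + 53442915970747698734865926400000000 * (z3 + z7) ^ 2
  + 1443654567346766835924864000000000 * (z3 + z8) ^ 2
  + 72143095519412022169374710400000000 * (z3 + z9) ^ 2
  + 56347636337704664997633388800000000 * (z3 - z10) ^ 2
  + 4064893285944899378087409600000000 * (z3 - z11) ^ 2
  + 13179178648718303931727617600000000 * (z3 + z12) ^ 2
  + 57805731785570737250611929600000000 * (z3 + z13) ^ 2
  + 40176360279999000965256148800000000 * (z3 - z14) ^ 2
  + 32705207991231037131639369600000000 * (z3 + z15) ^ 2
  + 3260665000042181018338811760000000 * (z4 + z5) ^ 2
  + 1794344654984026294486537200000000 * (z4 - z6) ^ 2
  + 68398620045397671709306907280000000 * (z4 - z7) ^ 2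
  + 92528557214357163684777632640000000 * (z4 + z8) ^ 2
  + 106549757838998745655473048960000000 * (z4 - z9) ^ 2
  + 97431251387983802891635073040000000 * (z4 + z10) ^ 2
  + 68125438923623311194392107680000000 * (z4 - z11) ^ 2
  + 59889221160469994461012004160000000 * (z4 + z12) ^ 2
  + 59750673176302534321626210480000000 * (z4 - z13) ^ 2
  + 33160705019372297924174938320000000 * (z4 + z14) ^ 2
  + 27554218363011001981346707680000000 * (z4 + z15) ^ 2
  + 95477407565191003729884386880000000 * (z5 - z6) ^ 2
  + 61122206250171362681271366480000000 * (z5 + z7) ^ 2
  + 34627510043233687590292442160000000 * (z5 + z8) ^ 2
  + 100137760028038216969731726480000000 * (z5 + z9) ^ 2
  + 61880925579418586421749928960000000 * (z5 - z10) ^ 2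
  + 280151863316024964854269680000000 * (z5 + z11) ^ 2
  + 49638528613258572484196219520000000 * (z5 + z12) ^ 2
  + 88834878947248847293182382080000000 * (z5 + z13) ^ 2
  + 77561050114308165346228407120000000 * (z5 - z14) ^ 2
  + 137623056903478340453744765280000000 * (z5 - z15) ^ 2
  + 62283475596435699609058255200000000 * (z6 - z7) ^ 2
  + 275345699565057175266021810000000000 * (z6 - z8) ^ 2
  + 64396927519528904185166321040000000 * (z6 - z9) ^ 2
  + 20016469710724012109674730640000000 * (z6 + z10) ^ 2
  + 392373140633341319531251972800000000 * (z6 - z11) ^ 2
  + 115660671709370952466637375040000000 * (z6 + z12) ^ 2
  + 212509583485904812235667739200000000 * (z6 + z13) ^ 2
  + 326231366521532224836027344400000000 * (z6 - z14) ^ 2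
  + 120895024058651484071875645200000000 * (z6 + z15) ^ 2
  + 221155367851543485029436486720000000 * (z7 + z8) ^ 2
  + 17817621367258673905741196400000000 * (z7 + z9) ^ 2
  + 15494165829591615080972497440000000 * (z7 - z10) ^ 2
  + 202457463703855712045642108160000000 * (z7 + z11) ^ 2
  + 68270517125295971542636900320000000 * (z7 + z12) ^ 2
  + 47534339285608336914384712080000000 * (z7 - z13) ^ 2
  + 194902422294284270000323368480000000 * (z7 + z14) ^ 2
  + 129330078239938646378109962160000000 * (z7 - z15) ^ 2
  + 24188822477607532863197748240000000 * (z8 + z9) ^ 2
  + 26733547931819802322353904800000000 * (z8 - z10) ^ 2
  + 43496705238990125347856751120000000 * (z8 - z11) ^ 2
  + 29724754459839559676128132560000000 * (z8 + z12) ^ 2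
  + 11433550975014714873827900400000000 * (z8 + z13) ^ 2
  + 11272375992392247683879969040000000 * (z8 + z14) ^ 2
  + 17469297150426298224947980080000000 * (z8 - z15) ^ 2
  + 81759261123291097772450060400000000 * (z9 - z10) ^ 2
  + 123103948259695987217425231440000000 * (z9 - z11) ^ 2
  + 161412907607858189101161863520000000 * (z9 + z12) ^ 2
  + 104564558823765531061102131600000000 * (z9 + z13) ^ 2
  + 78715147334097898660560123600000000 * (z9 - z14) ^ 2
  + 3601921865215623573002258880000000 * (z9 + z15) ^ 2
  + 90084101535455981183043493680000000 * (z10 + z11) ^ 2
  + 208219945635201269297560752720000000 * (z10 - z12) ^ 2
  + 121435328154768856196448720240000000 * (z10 - z13) ^ 2
  + 57847884834523370091313929120000000 * (z10 + z14) ^ 2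
  + 91346765868523287208353627360000000 * (z10 + z15) ^ 2
  + 129114775011011144701594248000000000 * (z11 + z12) ^ 2
  + 33080910602493532420842520320000000 * (z11 - z13) ^ 2
  + 2102987286967628105758153440000000 * (z11 + z14) ^ 2
  + 71133614140337408955241346400000000 * (z11 - z15) ^ 2
  + 81828914470633367970479426880000000 * (z12 + z13) ^ 2
  + 119144702360574396572022356400000000 * (z12 + z14) ^ 2
  + 125508837989544024197162700720000000 * (z12 - z15) ^ 2
  + 113169190642910488700339085360000000 * (z13 - z14) ^ 2
  + 202969771467747739326837005040000000 * (z13 + z15) ^ 2
  + 52463247083166477213606590640000000 * (z14 - z15) ^ 2
  + 1164295831542409285902400000000000000000 * z0 ^ 2
  + 1163631952463747183245059498540000000000 * z1 ^ 2
  + 1163244865924954226736935056137600000000 * z2 ^ 2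
  + 1163887433891740391533487521766400000000 * z3 ^ 2
  + 1163591686279477533138995330605440000000 * z4 ^ 2
  + 1163531868251392318506191692408080000000 * z5 ^ 2
  + 1162281851851871087016751680532560000000 * z6 ^ 2
  + 1163352194886847798644219735687360000000 * z7 ^ 2
  + 1163412092430852147609853087969920000000 * z9 ^ 2
  + 1163384761078469417077434977581680000000 * z10 ^ 2
  + 1162912957416220706125592707550880000000 * z11 ^ 2
  + 1163294355160451475101632007608560000000 * z12 ^ 2
  + 1163364495255951454900051322720400000000 * z13 ^ 2
  + 1163135384358043109962511485802880000000 * z14 ^ 2
  + 1163321513614701930000159020973600000000 * z15 ^ 2.

Definition gram_lo_even_diag (z0 z1 z2 z3 z4 z5 z6 z7 z8 z9 z10 z11 z12 z13 z14 z15 : R) : R :=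
  1163617104082117144005752183290720000000 * z8 ^ 2.

Definition gram_lo_odd (z0 z1 z2 z3 z4 z5 z6 z7 z8 z9 z10 : R) : R :=
  37356 * (z0 * z0) + (-71450) * (z0 * z1) + (-150216) * (z0 * z2) + 376100 * (z0 * z3)
  + (-444044) * (z0 * z4) + 223536 * (z0 * z5) + 10 * (z0 * z6) + 133948 * (z0 * z7)
  + (-111394) * (z0 * z8) + (-33364) * (z0 * z9) + 16654 * (z0 * z10) + 188829 * (z1 * z1)
  + 87790 * (z1 * z2) + (-689136) * (z1 * z3) + 723630 * (z1 * z4) + (-355324) * (z1 * z5)
  + (-56) * (z1 * z6) + 18252 * (z1 * z7) + 218452 * (z1 * z8) + 66002 * (z1 * z9)
  + (-290668) * (z1 * z10) + 289067 * (z2 * z2) + (-1537308) * (z2 * z3) + 1812918 * (z2 * z4)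
  + (-801054) * (z2 * z5) + 66 * (z2 * z6) + (-812768) * (z2 * z7) + 848004 * (z2 * z8)
  + (-94350) * (z2 * z9) + 7538 * (z2 * z10) + 2746710 * (z3 * z3) + (-7186260) * (z3 * z4)
  + 3492048 * (z3 * z5) + (-132) * (z3 * z6) + 2225726 * (z3 * z7) + (-3092556) * (z3 * z8)
  + 816220 * (z3 * z9) + 107848 * (z3 * z10) + 5995919 * (z4 * z4) + (-7191734) * (z4 * z5)
  + (-38) * (z4 * z6) + (-2925744) * (z4 * z7) + 3807624 * (z4 * z8) + (-1831608) * (z4 * z9)
  + 1052430 * (z4 * z10) + 2519520 * (z5 * z5) + 170 * (z5 * z6) + 1408000 * (z5 * z7)
  + (-1629842) * (z5 * z8) + 1147242 * (z5 * z9) + (-1114988) * (z5 * z10) + 763 * (z6 * z6)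
  + (-160) * (z6 * z7) + 68 * (z6 * z8) + 444 * (z6 * z9) + (-496) * (z6 * z10) + 723564 * (z7 * z7)
  + (-1460764) * (z7 * z8) + 280708 * (z7 * z9) + (-178178) * (z7 * z10) + 1256586 * (z8 * z8)
  + (-828478) * (z8 * z9) + (-184480) * (z8 * z10) + 468081 * (z9 * z9) + (-451186) * (z9 * z10)
  + 424420 * (z10 * z10).

Definition gram_lo_odd_sos (z0 z1 z2 z3 z4 z5 z6 z7 z8 z9 z10 : R) : R :=
  3715600000000 *
      (100000000 * z0 + (-96148670) * z1 + (-202142319) * z2 + 506109377 * z3 + (-597540101) * z4
        + 300807407 * z5 + 13457 * z6 + 180250834 * z7 + (-149900420) * z8 + (-44897190) * z9
        + 22410916 * z10) ^ 2
  + 15427989000000 *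
      (100000000 * z1 + (-18356471) * z2 + (-106145025) * z3 + 96152390 * z4 + (-45500781) * z5
        + (-15033) * z6 + 47654047 * z7 + 36086411 * z8 + 10993966 * z9 + (-89012056) * z10) ^ 2
  + 13184333000000 *
      (100000000 * z2 + (-317487430) * z3 + 367776863 * z4 + (-142201011) * z5 + 29467 * z6
        + (-195311671) * z7 + 243952110 * z8 + (-58996425) * z9 + (-3494397) * z10) ^ 2
  + 29198982000000 *
      (100000000 * z3 + (-264575592) * z4 + 174872488 * z5 + 2541 * z6 + 11778649 * z7 + (-63065763) * z8
        + 90274432 * z9 + (-50896742) * z10) ^ 2
  + 69916599000000 *
      (100000000 * z4 + (-117288924) * z5 + (-12883) * z6 + (-13634522) * z7 + (-21830839) * z8
        + (-6912046) * z9 + 47451600 * z10) ^ 2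
  + 2983332000000 *
      (100000000 * z5 + (-13301) * z6 + (-7165352) * z7 + (-72680650) * z8 + 10992079 * z9
        + (-8617477) * z10) ^ 2
  + 56297000000 *
      (100000000 * z6 + (-2757042) * z7 + (-11151285) * z8 + 42138270 * z9 + (-39474789) * z10) ^ 2
  + 4746706000000 * (100000000 * z7 + (-61105906) * z8 + (-56825866) * z9 + 31378377 * z10) ^ 2
  + 18522649000000 * (100000000 * z8 + (-61546031) * z9 + (-17843484) * z10) ^ 2
  + 8539014000000 * (100000000 * z9 + (-74814822) * z10) ^ 2
  + 821192000000 * (100000000 * z10) ^ 2
  + 174800000000000000000 * (z0 - z1) ^ 2
  + 47640000000000000000 * (z0 + z2) ^ 2
  + 118120000000000000000 * (z0 - z3) ^ 2
  + 72440000000000000000 * (z0 - z4) ^ 2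
  + 144920000000000000000 * (z0 - z5) ^ 2
  + 82920000000000000000 * (z0 - z6) ^ 2
  + 118960000000000000000 * (z0 + z7) ^ 2
  + 55200000000000000000 * (z0 + z8) ^ 2
  + 83600000000000000000 * (z0 - z9) ^ 2
  + 51040000000000000000 * (z0 + z10) ^ 2
  + 157276673612000000000 * (z1 + z2) ^ 2
  + 1859043309004000000000 * (z1 + z3) ^ 2
  + 1562120903452000000000 * (z1 - z4) ^ 2
  + 500879552564000000000 * (z1 + z5) ^ 2
  + 409090177164000000000 * (z1 + z6) ^ 2
  + 1160726757832000000000 * (z1 - z7) ^ 2
  + 21278034160000000000 * (z1 + z8) ^ 2
  + 299542888120000000000 * (z1 + z9) ^ 2
  + 1785364118832000000000 * (z1 + z10) ^ 2
  + 4278815812222675000000 * (z2 - z3) ^ 2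
  + 4414632716431010000000 * (z2 + z4) ^ 2
  + 1779290228590839000000 * (z2 - z5) ^ 2
  + 387687969375227000000 * (z2 - z6) ^ 2
  + 2897498274715907000000 * (z2 - z7) ^ 2
  + 2513550096408609000000 * (z2 + z8) ^ 2
  + 1275814223901846000000 * (z2 - z9) ^ 2
  + 360245538212536000000 * (z2 + z10) ^ 2
  + 19388092217510080000000 * (z3 - z4) ^ 2
  + 10251556246595285000000 * (z3 + z5) ^ 2
  + 1281677950537405000000 * (z3 + z6) ^ 2
  + 10415897176519785000000 * (z3 + z7) ^ 2
  + 11842044049863125000000 * (z3 - z8) ^ 2
  + 4524032394146600000000 * (z3 + z9) ^ 2
  + 2549241961777230000000 * (z3 - z10) ^ 2
  + 22030980065481249000000 * (z4 - z5) ^ 2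
  + 656739923454259000000 * (z4 - z6) ^ 2
  + 11187507809085405000000 * (z4 - z7) ^ 2
  + 16558250219920028000000 * (z4 + z8) ^ 2
  + 5636090849889177000000 * (z4 - z9) ^ 2
  + 6119705335179575000000 * (z4 + z10) ^ 2
  + 855653059558440000000 * (z5 - z6) ^ 2
  + 5143118395005894000000 * (z5 + z7) ^ 2
  + 13793089959640527000000 * (z5 - z8) ^ 2
  + 3165937028955111000000 * (z5 + z9) ^ 2
  + 4856284997755443000000 * (z5 - z10) ^ 2
  + 759730918233244000000 * (z6 + z7) ^ 2
  + 1780468360294660000000 * (z6 - z8) ^ 2
  + 1547870967277779000000 * (z6 + z9) ^ 2
  + 581201823782965000000 * (z6 - z10) ^ 2
  + 4676982739571681000000 * (z7 - z8) ^ 2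
  + 2774704196655819000000 * (z7 + z9) ^ 2
  + 400240378527581000000 * (z7 - z10) ^ 2
  + 5181519952511284000000 * (z8 - z9) ^ 2
  + 1617141644649429000000 * (z8 + z10) ^ 2
  + 544849233373489000000 * (z9 + z10) ^ 2
  + 199983237878950122002000000 * z2 ^ 2
  + 199948527979630736590000000 * z3 ^ 2
  + 199947038774067454992000000 * z4 ^ 2
  + 199956714585372722858000000 * z5 ^ 2
  + 199964772383916643796000000 * z7 ^ 2
  + 199950430022994186810000000 * z8 ^ 2
  + 199975388318830128297000000 * z9 ^ 2
  + 199982600603661184844000000 * z10 ^ 2.

Definition gram_lo_odd_diag (z0 z1 z2 z3 z4 z5 z6 z7 z8 z9 z10 : R) : R :=
  199999050360000000000000000 * z0 ^ 2 + 199989880445460420000000000 * z1 ^ 2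
  + 199993728993907390978000000 * z6 ^ 2.

Definition gram_hi_even (z0 z1 z2 z3 z4 z5 z6 z7 z8 z9 z10 z11 z12 z13 z14 z15 : R) : R :=
  25875955592650548000 * (z0 * z0) + (-45383954465454917130) * (z0 * z1)
  + (-233687738824406100000) * (z0 * z2) + (-113442378131646316506) * (z0 * z3)
  + 316219775009050155474 * (z0 * z4) + (-152493194723450080500) * (z0 * z5)
  + 201489609902468706000 * (z0 * z6) + (-84047980875826968000) * (z0 * z7)
  + (-55934676140473871260) * (z0 * z8) + 105225126549462612000 * (z0 * z9)
  + (-10383309451331403678) * (z0 * z10) + 177633920599391196486 * (z0 * z11)
  + (-421780434609413880000) * (z0 * z12) + 244486070924627262654 * (z0 * z13)
  + (-343063380423627864000) * (z0 * z14) + 307860037339114260000 * (z0 * z15)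
  + 513092153418090246000 * (z1 * z1) + (-469714541842069524000) * (z1 * z2)
  + (-451314177150020184000) * (z1 * z3) + 307314474750190908000 * (z1 * z4)
  + (-1270856609723200500000) * (z1 * z5) + 2270012860893301524000 * (z1 * z6)
  + (-1319125034535646338000) * (z1 * z7) + (-41870327528981952000) * (z1 * z8)
  + (-407902940985407868000) * (z1 * z9) + 470899990541160180000 * (z1 * z10)
  + 1242677457751569840000 * (z1 * z11) + (-1266208847326102680000) * (z1 * z12)
  + (-425866622708735208000) * (z1 * z13) + 1041066753532205400000 * (z1 * z14)
  + (-542409446767200012000) * (z1 * z15) + 815136010296796188000 * (z2 * z2)
  + 950906567712048948000 * (z2 * z3) + (-2045209050839174220000) * (z2 * z4)
  + 1552758173547625044000 * (z2 * z5) + (-2039580789616305936000) * (z2 * z6)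
  + 929355680961659952000 * (z2 * z7) + 296001474640499628000 * (z2 * z8)
  + (-155305133338062708000) * (z2 * z9) + (-288947589085743588000) * (z2 * z10)
  + (-1855814115986839008000) * (z2 * z11) + 3097272354889737024000 * (z2 * z12)
  + (-539141311429284564000) * (z2 * z13) + 523070213692398372000 * (z2 * z14)
  + (-1110569214833998920000) * (z2 * z15) + 295656058412240526000 * (z3 * z3)
  + (-1141085494054229724000) * (z3 * z4) + 1059064787649072204000 * (z3 * z5)
  + (-1487320357318695900000) * (z3 * z6) + 725822843874970842000 * (z3 * z7)
  + 161819278743478356000 * (z3 * z8) + 6074551216902168000 * (z3 * z9)
  + (-245680458300809532000) * (z3 * z10) + (-1223566755430399380000) * (z3 * z11)
  + 1873508509879454448000 * (z3 * z12) + (-173174491540146096000) * (z3 * z13)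
  + 38229847179736212000 * (z3 * z14) + (-466782361268090868000) * (z3 * z15)
  + 1352652861082434912000 * (z4 * z4) + (-1559788769344049244000) * (z4 * z5)
  + 1566158809369786632000 * (z4 * z6) + (-516432050323865676000) * (z4 * z7)
  + (-355519907667412488000) * (z4 * z8) + 243852794515718388000 * (z4 * z9)
  + 248419042758654768000 * (z4 * z10) + 2101415971353278580000 * (z4 * z11)
  + (-3674261852584094772000) * (z4 * z12) + 513209038892718168000 * (z4 * z13)
  + (-603068495708414736000) * (z4 * z14) + 1522530687330709056000 * (z4 * z15)
  + 1315252274860301778000 * (z5 * z5) + (-4833804480116307696000) * (z5 * z6)
  + 2769854403349151118000 * (z5 * z7) + 327527073762436548000 * (z5 * z8)
  + 6858251584768584000 * (z5 * z9) + (-614998965535878924000) * (z5 * z10)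
  + (-2440376860846752828000) * (z5 * z11) + 3580965700804556064000 * (z5 * z12)
  + (-959785205832104652000) * (z5 * z13) + 592683010224288984000 * (z5 * z14)
  + (-655521980545363932000) * (z5 * z15) + 5186194389824910462000 * (z6 * z6)
  + (-6327696042748332252000) * (z6 * z7) + (-586743539605711488000) * (z6 * z8)
  + 267353034038482392000 * (z6 * z9) + 1021685598892406448000 * (z6 * z10)
  + 3712834641455267328000 * (z6 * z11) + (-5558358177723182832000) * (z6 * z12)
  + 3022742799252015840000 * (z6 * z13) + (-2621249782003488636000) * (z6 * z14)
  + 1159116424954740252000 * (z6 * z15) + 1974340354089239136000 * (z7 * z7)
  + 321868826975716020000 * (z7 * z8) + (-190785624546725208000) * (z7 * z9)
  + (-572300978220179208000) * (z7 * z10) + (-1929546579645652968000) * (z7 * z11)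
  + 2874678742901301336000 * (z7 * z12) + (-1983459458964071088000) * (z7 * z13)
  + 1785286323074486232000 * (z7 * z14) + (-575245094795302932000) * (z7 * z15)
  + 37681373371021380000 * (z8 * z8) + (-110325331949800968000) * (z8 * z9)
  + (-28700551436284728000) * (z8 * z10) + (-306019273064961456000) * (z8 * z11)
  + 607075207507428660000 * (z8 * z12) + (-348789167509510728000) * (z8 * z13)
  + 426045080481952932000 * (z8 * z14) + (-334354757539394592000) * (z8 * z15)
  + 216998393110200702000 * (z9 * z9) + (-186141937857335460000) * (z9 * z10)
  + (-173278422086701932000) * (z9 * z11) + (-298516186296380052000) * (z9 * z12)
  + 1044042893525035404000 * (z9 * z13) + (-1515865158496136448000) * (z9 * z14)
  + 831055724604525420000 * (z9 * z15) + 111411071371033434000 * (z10 * z10)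
  + 636917248223952696000 * (z10 * z11) + (-697831611140880216000) * (z10 * z12)
  + (-216425610616227012000) * (z10 * z13) + 502968532154208120000 * (z10 * z14)
  + (-205272436473087984000) * (z10 * z15) + 1338979589526801222000 * (z11 * z11)
  + (-3836645325723161952000) * (z11 * z12) + 189106432970999544000 * (z11 * z13)
  + 308864117045195712000 * (z11 * z14) + 592536284746798392000 * (z11 * z15)
  + 3125516135940738540000 * (z12 * z12) + (-1501353310079566944000) * (z12 * z13)
  + 1370691070032424140000 * (z12 * z14) + (-2037907711602142380000) * (z12 * z15)
  + 1568467406664430272000 * (z13 * z13) + (-4123772820195272244000) * (z13 * z14)
  + 1986211726154936280000 * (z13 * z15) + 2841008739280960248000 * (z14 * z14)
  + (-2818705593336452820000) * (z14 * z15) + 1014894742045810626000 * (z15 * z15).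

Definition gram_hi_even_sos (z0 z1 z2 z3 z4 z5 z6 z7 z8 z9 z10 z11 z12 z13 z14 z15 : R) : R :=
  2584684279178541540000000000 *
      (100000000 * z0 + (-87793998) * z1 + (-452062434) * z2 + (-219451127) * z3 + 611718364 * z4
        + (-294993846) * z5 + 389776049 * z6 + (-162588482) * z7 + (-108204076) * z8 + 203555082 * z9
        + (-20086223) * z10 + 343627881 * z11 + (-815922525) * z12 + 472951507 * z13 + (-663646572) * z14
        + 595546684 * z15) ^ 2
  + 49314084657139920618000000000 *
      (100000000 * z1 + (-68426531) * z2 + (-55857244) * z3 + 59307241 * z4 + (-142427512) * z5
        + 248094298 * z6 + (-141228832) * z7 + (-9224303) * z8 + (-31991022) * z9 + 46820708 * z10
        + 141808308 * z11 + (-165926912) * z12 + (-21416044) * z13 + 75016874 * z14 + (-27591185) * z15) ^ 2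
  + 5600173483198105812000000000 *
      (100000000 * z2 + 54558793 * z3 + (-192356996) * z4 + (-87335438) * z5 + 487139150 * z6
        + (-360449975) * z7 + (-17062874) * z8 + 93280728 * z9 + (-17770709) * z10 + (-85501210) * z11
        + 63173623 * z12 + 376377735 * z13 + (-465626477) * z14 + 84768290 * z15) ^ 2
  + 62032416877845414000000000 *
      (100000000 * z3 + (-230785052) * z4 + (-553067379) * z5 + 1930189681 * z6 + (-1322050482) * z7
        + (-106464544) * z8 + 302169542 * z9 + 26791377 * z10 + (-21232921) * z11 + (-387294087) * z12
        + 1239184835 * z13 + (-1355540102) * z14 + 404420222 * z15) ^ 2
  + 146452259513161602000000000 *
      (100000000 * z4 + 73532451 * z5 + (-436798786) * z6 + 320020698 * z7 + 26950732 * z8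
        + (-105139673) * z9 + 18606421 * z10 + 16757855 * z11 + 48813211 * z12 + (-365766730) * z13
        + 502686174 * z14 + (-174288250) * z15) ^ 2
  + 2745300496343190786000000000 *
      (100000000 * z5 + (-247674205) * z6 + 159965780 * z7 + 15243725 * z8 + (-32563672) * z9
        + (-7043002) * z10 + (-17828174) * z11 + 72984994 * z12 + (-142664479) * z13 + 136866220 * z14
        + (-37362754) * z15) ^ 2
  + 176333310574891470000000000 *
      (100000000 * z6 + (-74518375) * z7 + (-6902321) * z8 + 27101479 * z9 + (-4430693) * z10
        + 861327 * z11 + (-20461757) * z12 + 76895240 * z13 + (-116338222) * z14 + 51688232 * z15) ^ 2
  + 14009663002539204000000000 *
      (100000000 * z7 + (-1931598) * z8 + 3878246 * z9 + (-12260703) * z10 + (-7489484) * z11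
        + (-1886515) * z12 + 35414041 * z13 + (-38826845) * z14 + 16527275 * z15) ^ 2
  + 10811688061598424000000000 *
      (100000000 * z8 + (-61223260) * z9 + 22897392 * z10 + (-26517716) * z11 + 68858625 * z12
        + (-191751757) * z13 + 224607994 * z14 + (-77639655) * z15) ^ 2
  + 31144229329253040000000000 *
      (100000000 * z9 + (-52488822) * z10 + (-2221021) * z11 + (-22418913) * z12 + 217783252 * z13
        + (-351554706) * z14 + 154689764 * z15) ^ 2
  + 13689719947455552000000000 *
      (100000000 * z10 + 9309814 * z11 + (-18167866) * z12 + (-77166468) * z13 + 208056012 * z14
        + (-131390422) * z15) ^ 2
  + 17295556781182680000000000 *
      (100000000 * z11 + (-45826146) * z12 + (-8859079) * z13 + 7804986 * z14 + (-5435910) * z15) ^ 2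
  + 27496616491518174000000000 *
      (100000000 * z12 + (-52307236) * z13 + (-7353203) * z14 + 1624530 * z15) ^ 2
  + 53116951827427488000000000 * (100000000 * z13 + (-107429757) * z14 + 31149465 * z15) ^ 2
  + 50851731707676900000000000 * (100000000 * z14 + (-60802653) * z15) ^ 2
  + 16941406893549138000000000 * (100000000 * z15) ^ 2
  + 589044226804432308000000000000000000 * (z0 - z1) ^ 2
  + 2775504349085749164000000000000000000 * (z0 - z2) ^ 2
  + 1265331800736068442000000000000000000 * (z0 - z3) ^ 2
  + 3632963408261515944000000000000000000 * (z0 + z4) ^ 2
  + 1740663471294463716000000000000000000 * (z0 - z5) ^ 2
  + 2326171864295642454000000000000000000 * (z0 + z6) ^ 2
  + 1097823156403745772000000000000000000 * (z0 - z7) ^ 2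
  + 652212922993668296000000000000000000 * (z0 - z8) ^ 2
  + 1235501414418489372000000000000000000 * (z0 + z9) ^ 2
  + 244048257620279658000000000000000000 * (z0 - z10) ^ 2
  + 2108882133236932326000000000000000000 * (z0 + z11) ^ 2
  + 4965190886086581150000000000000000000 * (z0 - z12) ^ 2
  + 2966643636986489922000000000000000000 * (z0 + z13) ^ 2
  + 4053900925101939912000000000000000000 * (z0 - z14) ^ 2
  + 3504386064189674664000000000000000000 * (z0 + z15) ^ 2
  + 1393660228203828255127176720000000000 * (z1 + z2) ^ 2
  + 1125097629598562062491888840000000000 * (z1 - z3) ^ 2
  + 4686443335613186411185041120000000000 * (z1 - z4) ^ 2
  + 1068841938477667904464234320000000000 * (z1 - z5) ^ 2
  + 1004167858517989726551910920000000000 * (z1 - z6) ^ 2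
  + 99116860537236932594764560000000000 * (z1 + z7) ^ 2
  + 1513413255175822878083125920000000000 * (z1 - z8) ^ 2
  + 2110591118012657231283892560000000000 * (z1 - z9) ^ 2
  + 1563100873184890207081073160000000000 * (z1 - z10) ^ 2
  + 3206288696558131680809793480000000000 * (z1 - z11) ^ 2
  + 6059978760424561294699377000000000000 * (z1 + z12) ^ 2
  + 5166276393670932949730881560000000000 * (z1 - z13) ^ 2
  + 4136258415345126451102481760000000000 * (z1 + z14) ^ 2
  + 5660009111720249057718666720000000000 * (z1 - z15) ^ 2
  + 8194028209154676992705329728000000000 * (z2 + z3) ^ 2
  + 16862005271693140713248976882000000000 * (z2 - z4) ^ 2
  + 10768547493445101136741508544000000000 * (z2 + z5) ^ 2
  + 12438983629225631352862263276000000000 * (z2 - z6) ^ 2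
  + 6099827168265353981056623024000000000 * (z2 + z7) ^ 2
  + 4641752715319606207892336766000000000 * (z2 + z8) ^ 2
  + 4540474851824320534817647956000000000 * (z2 - z9) ^ 2
  + 1629135124363393997241475584000000000 * (z2 + z10) ^ 2
  + 10551805174607389413518974176000000000 * (z2 - z11) ^ 2
  + 23922830495320176554176946904000000000 * (z2 + z12) ^ 2
  + 10771847004753521621242740432000000000 * (z2 - z13) ^ 2
  + 16452425944234392560984708172000000000 * (z2 + z14) ^ 2
  + 14022736440326019929121588990000000000 * (z2 - z15) ^ 2
  + 8854571713607255849206665672000000000 * (z3 - z4) ^ 2
  + 7039622621986714898545431024000000000 * (z3 + z5) ^ 2
  + 6888950525214063012288545964000000000 * (z3 - z6) ^ 2
  + 3172773216287571073281700596000000000 * (z3 + z7) ^ 2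
  + 2646602256529074756953568528000000000 * (z3 + z8) ^ 2
  + 823879017460051289827802712000000000 * (z3 - z9) ^ 2
  + 437118327185012761247799840000000000 * (z3 + z10) ^ 2
  + 6962016881810887854571337724000000000 * (z3 - z11) ^ 2
  + 12857782964509882115632443528000000000 * (z3 + z12) ^ 2
  + 1934856146469209211337137048000000000 * (z3 - z13) ^ 2
  + 3916232143925566620452677380000000000 * (z3 + z14) ^ 2
  + 4734979730617421577807955440000000000 * (z3 - z15) ^ 2
  + 7332476896811045136091406472000000000 * (z4 - z5) ^ 2
  + 1947154062005618896238212404000000000 * (z4 + z6) ^ 2
  + 1037569902018863532043364640000000000 * (z4 + z7) ^ 2
  + 4846665802473617898513443706000000000 * (z4 - z8) ^ 2
  + 5869776494157953191334868348000000000 * (z4 + z9) ^ 2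
  + 2771153081472705261106110336000000000 * (z4 - z10) ^ 2
  + 10503438679499640401837838528000000000 * (z4 + z11) ^ 2
  + 25961338028155541449539084984000000000 * (z4 - z12) ^ 2
  + 10482885487190031688316495952000000000 * (z4 + z13) ^ 2
  + 17979946249083005984875130052000000000 * (z4 - z14) ^ 2
  + 17950359699397610244845871786000000000 * (z4 + z15) ^ 2
  + 31396543944227309772948937914000000000 * (z5 - z6) ^ 2
  + 19732353732263056000537741320000000000 * (z5 + z7) ^ 2
  + 5854954621256272142271100440000000000 * (z5 + z8) ^ 2
  + 4503322605259151932474021806000000000 * (z5 - z9) ^ 2
  + 2561347978963103323167498324000000000 * (z5 + z10) ^ 2
  + 6709741414121397211169838228000000000 * (z5 - z11) ^ 2
  + 18390234806524173563996577552000000000 * (z5 + z12) ^ 2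
  + 16971343756854953987726499294000000000 * (z5 - z13) ^ 2
  + 23517403020743612062525875432000000000 * (z5 + z14) ^ 2
  + 10280220229098685287926031528000000000 * (z5 - z15) ^ 2
  + 50583622653615064365591427188000000000 * (z6 - z7) ^ 2
  + 10373407404692025912649328898000000000 * (z6 - z8) ^ 2
  + 12946084523501231116155285144000000000 * (z6 + z9) ^ 2
  + 6590685223078630061879789298000000000 * (z6 - z10) ^ 2
  + 3079129023362347628721930882000000000 * (z6 + z11) ^ 2
  + 24938727953911285913772935562000000000 * (z6 - z12) ^ 2
  + 49230208690953638102732253276000000000 * (z6 + z13) ^ 2
  + 64609462277597569207939883820000000000 * (z6 - z14) ^ 2
  + 22622181753981858262271389332000000000 * (z6 + z15) ^ 2
  + 5964914385974165510158027758000000000 * (z7 + z8) ^ 2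
  + 8048456148819123193990711878000000000 * (z7 - z9) ^ 2
  + 3702694248078497080640088858000000000 * (z7 + z10) ^ 2
  + 1082829904414737601328936730000000000 * (z7 - z11) ^ 2
  + 13840498215778763579745480786000000000 * (z7 + z12) ^ 2
  + 31914329196746038741681286304000000000 * (z7 - z13) ^ 2
  + 40879809823946465283842594664000000000 * (z7 + z14) ^ 2
  + 13320085446338050295038187064000000000 * (z7 - z15) ^ 2
  + 933000994417200629523140538000000000 * (z8 - z9) ^ 2
  + 547443954435526761447412578000000000 * (z8 - z10) ^ 2
  + 5143961316695370631604544402000000000 * (z8 - z11) ^ 2
  + 9225604791527593217760721710000000000 * (z8 + z12) ^ 2
  + 4059172918846875311200232514000000000 * (z8 - z13) ^ 2
  + 4480330974920460689956918992000000000 * (z8 + z14) ^ 2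
  + 3581634468144088326757404618000000000 * (z8 - z15) ^ 2
  + 818680093236034211808465840000000000 * (z9 - z10) ^ 2
  + 3265633361858673332315712924000000000 * (z9 + z11) ^ 2
  + 10853775293817019221889931700000000000 * (z9 - z12) ^ 2
  + 15314225762939253477927503904000000000 * (z9 + z13) ^ 2
  + 19170043513087572338476186944000000000 * (z9 - z14) ^ 2
  + 11490008211021487210666018416000000000 * (z9 + z15) ^ 2
  + 3985159499549680210016860602000000000 * (z10 - z11) ^ 2
  + 5685179108381501335558665714000000000 * (z10 + z12) ^ 2
  + 3929483207962570452706205694000000000 * (z10 - z13) ^ 2
  + 3884370205715579241835857684000000000 * (z10 + z14) ^ 2
  + 3519728669264320458584923284000000000 * (z10 - z15) ^ 2
  + 12458066153132028908534421366000000000 * (z11 - z12) ^ 2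
  + 5918212800391958527795996662000000000 * (z11 + z13) ^ 2
  + 13224990288567877909821816084000000000 * (z11 - z14) ^ 2
  + 9050390016829995860644585968000000000 * (z11 + z15) ^ 2
  + 26986186317960623477143754334000000000 * (z12 - z13) ^ 2
  + 40975160585832067752582781356000000000 * (z12 + z14) ^ 2
  + 27803759508842458471806087612000000000 * (z12 - z15) ^ 2
  + 61226045559425997111561679980000000000 * (z13 - z14) ^ 2
  + 31103435282771195698116334572000000000 * (z13 + z15) ^ 2
  + 41964293792994447933579276756000000000 * (z14 - z15) ^ 2
  + 29079642596615084326900000000000000000000 * z0 ^ 2
  + 29073943686614356516484772565200000000000 * z1 ^ 2
  + 28981725412738409059537730766708000000000 * z2 ^ 2
  + 29046763028170512463731218629680000000000 * z3 ^ 2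
  + 28993148565731866655477700518772000000000 * z4 ^ 2
  + 28961084108359539491224699896066000000000 * z5 ^ 2
  + 28887361769038075971557655488814000000000 * z6 ^ 2
  + 28945407553604325915030724468644000000000 * z7 ^ 2
  + 29015635717155347080109357652738000000000 * z9 ^ 2
  + 29069529219284635961905187843226000000000 * z10 ^ 2
  + 29017809831067621729816156995762000000000 * z11 ^ 2
  + 28884923721480370262331238692066000000000 * z12 ^ 2
  + 28882635012394593872952020247198000000000 * z13 ^ 2
  + 28828546911545310425026970949510000000000 * z14 ^ 2
  + 28919235377613737165860880213184000000000 * z15 ^ 2.

Definition gram_hi_even_diag (z0 z1 z2 z3 z4 z5 z6 z7 z8 z9 z10 z11 z12 z13 z14 z15 : R) : R :=
  29048857759098349638245319310030000000000 * z8 ^ 2.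

Definition gram_hi_odd (z0 z1 z2 z3 z4 z5 z6 z7 z8 z9 z10 : R) : R :=
  771 * (z0 * z0) + 316 * (z0 * z1) + (-378) * (z0 * z2) + 68 * (z0 * z3) + (-62) * (z0 * z4)
  + (-6) * (z0 * z5) + 14 * (z0 * z6) + 378 * (z0 * z7) + 100 * (z0 * z8) + (-80) * (z0 * z9)
  + (-364) * (z0 * z10) + 3519 * (z1 * z1) + (-1868) * (z1 * z2) + (-4980) * (z1 * z3)
  + 4492 * (z1 * z4) + (-2378) * (z1 * z5) + (-126) * (z1 * z6) + 3336 * (z1 * z7) + 2206 * (z1 * z8)
  + (-124) * (z1 * z9) + (-4794) * (z1 * z10) + 1338 * (z2 * z2) + 446 * (z2 * z3)
  + (-250) * (z2 * z4) + 274 * (z2 * z5) + 66 * (z2 * z6) + (-1830) * (z2 * z7) + (-330) * (z2 * z8)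
  + 306 * (z2 * z9) + 1574 * (z2 * z10) + 4280 * (z3 * z3) + (-7442) * (z3 * z4) + 3742 * (z3 * z5)
  + (-66) * (z3 * z6) + (-1318) * (z3 * z7) + (-3276) * (z3 * z8) + (-184) * (z3 * z9)
  + 4446 * (z3 * z10) + 5208 * (z4 * z4) + (-5032) * (z4 * z5) + 92 * (z4 * z6) + 796 * (z4 * z7)
  + 3558 * (z4 * z8) + (-492) * (z4 * z9) + (-3516) * (z4 * z10) + 2227 * (z5 * z5)
  + (-10) * (z5 * z6) + (-576) * (z5 * z7) + (-1802) * (z5 * z8) + 568 * (z5 * z9) + 1534 * (z5 * z10)
  + 763 * (z6 * z6) + (-190) * (z6 * z7) + 44 * (z6 * z8) + 366 * (z6 * z9) + (-342) * (z6 * z10)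
  + 2204 * (z7 * z7) + 528 * (z7 * z8) + (-476) * (z7 * z9) + (-2556) * (z7 * z10) + 1613 * (z8 * z8)
  + (-204) * (z8 * z9) + (-2010) * (z8 * z10) + 1529 * (z9 * z9) + (-1344) * (z9 * z10)
  + 3558 * (z10 * z10).

Definition gram_hi_odd_sos (z0 z1 z2 z3 z4 z5 z6 z7 z8 z9 z10 : R) : R :=
  57100000000 *
      (100000000 * z0 + 27670753 * z1 + (-33099825) * z2 + 5954466 * z3 + (-5429072) * z4 + (-525394) * z5
        + 1225919 * z6 + 33099825 * z7 + 8756567 * z8 + (-7005254) * z9 + (-31873905) * z10) ^ 2
  + 327528000000 *
      (100000000 * z1 + (-26919904) * z2 + (-76311274) * z3 + 68836185 * z4 + (-36276892) * z5
        + (-1982638) * z6 + 49330200 * z7 + 33254090 * z8 + (-1555033) * z9 + (-71646976) * z10) ^ 2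
  + 83809000000 *
      (100000000 * z2 + (-52331538) * z3 + 56279210 * z4 + (-21936503) * z5 + 2128180 * z6
        + (-49815278) * z7 + 17271694 * z8 + 15040105 * z9 + 11340731 * z10) ^ 2
  + 194113000000 *
      (100000000 * z3 + (-90247820) * z4 + 44729727 * z5 + (-3793525) * z6 + 17733357 * z7
        + (-37816729) * z8 + (-3220876) * z9 + 25388622 * z10) ^ 2
  + 160792000000 *
      (100000000 * z4 + (-50451504) * z5 + 907153 * z6 + (-9845421) * z7 + 17913060 * z8 + (-21174981) * z9
        + 14847141 * z10) ^ 2
  + 75798000000 *
      (100000000 * z5 + 2069834 * z6 + (-3470276) * z7 + (-27294) * z8 + 19677881 * z9 + (-21688039) * z10) ^ 2
  + 55800000000 *
      (100000000 * z6 + (-7412146) * z7 + 1692649 * z8 + 31797260 * z9 + (-35373776) * z10) ^ 2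
  + 85583000000 * (100000000 * z7 + (-6835792) * z8 + (-16469480) * z9 + (-11338171) * z10) ^ 2
  + 68807000000 * (100000000 * z8 + (-11420696) * z9 + (-12332358) * z10) ^ 2
  + 111438000000 * (100000000 * z9 + (-53812049) * z10) ^ 2
  + 99771000000 * (100000000 * z10) ^ 2
  + 370000000000000000 * (z0 + z1) ^ 2
  + 750000000000000000 * (z0 + z2) ^ 2
  + 860000000000000000 * (z0 - z3) ^ 2
  + 1120000000000000000 * (z0 + z4) ^ 2
  + 260000000000000000 * (z0 - z5) ^ 2
  + 2510000000000000000 * (z0 + z6) ^ 2
  + 750000000000000000 * (z0 - z7) ^ 2
  + 2430000000000000000 * (z0 + z8) ^ 2
  + 340000000000000000 * (z0 + z9) ^ 2
  + 2450000000000000000 * (z0 - z10) ^ 2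
  + 44891269352500000000 * (z1 - z2) ^ 2
  + 161190768475800000000 * (z1 - z3) ^ 2
  + 133671912433600000000 * (z1 + z4) ^ 2
  + 89184343957800000000 * (z1 - z5) ^ 2
  + 6129064099700000000 * (z1 - z6) ^ 2
  + 102062469352500000000 * (z1 + z7) ^ 2
  + 65220399297900000000 * (z1 + z8) ^ 2
  + 13863519439800000000 * (z1 - z9) ^ 2
  + 154685133448500000000 * (z1 - z10) ^ 2
  + 1121688347519512000000 * (z2 + z3) ^ 2
  + 1197826100505280000000 * (z2 - z4) ^ 2
  + 476962042390696000000 * (z2 + z5) ^ 2
  + 40335956436556000000 * (z2 - z6) ^ 2
  + 1007205913109900000000 * (z2 + z7) ^ 2
  + 374877023941420000000 * (z2 - z8) ^ 2
  + 306772196036296000000 * (z2 - z9) ^ 2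
  + 199486871536012000000 * (z2 - z10) ^ 2
  + 2826325857534340000000 * (z3 + z4) ^ 2
  + 1315021835320750000000 * (z3 - z5) ^ 2
  + 115144669923424000000 * (z3 + z6) ^ 2
  + 1069780169201876000000 * (z3 - z7) ^ 2
  + 1115616137914228000000 * (z3 + z8) ^ 2
  + 261839160697634000000 * (z3 + z9) ^ 2
  + 416050344419970000000 * (z3 - z10) ^ 2
  + 3364826525252250000000 * (z4 + z5) ^ 2
  + 153677248695060000000 * (z4 - z6) ^ 2
  + 1464108304928040000000 * (z4 + z7) ^ 2
  + 1804170954726600000000 * (z4 - z8) ^ 2
  + 634610375848030000000 * (z4 + z9) ^ 2
  + 255763421536390000000 * (z4 - z10) ^ 2
  + 99425516374751000000 * (z5 + z6) ^ 2
  + 719893131442141000000 * (z5 - z7) ^ 2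
  + 870076193077137000000 * (z5 + z8) ^ 2
  + 110731480469005000000 * (z5 - z9) ^ 2
  + 120243293146173000000 * (z5 - z10) ^ 2
  + 285738236603613000000 * (z6 + z7) ^ 2
  + 110337830441897000000 * (z6 - z8) ^ 2
  + 1064863306668748000000 * (z6 - z9) ^ 2
  + 1201158400085098000000 * (z6 + z10) ^ 2
  + 591592000507285000000 * (z7 + z8) ^ 2
  + 465394094617922000000 * (z7 + z9) ^ 2
  + 125858527888800000000 * (z7 + z10) ^ 2
  + 400502990144110000000 * (z8 - z9) ^ 2
  + 403312451972356000000 * (z8 - z10) ^ 2
  + 825338986104585000000 * (z9 - z10) ^ 2
  + 199993165358133906280000000 * z2 ^ 2
  + 199988592440783892542000000 * z3 ^ 2
  + 199981277213638110110000000 * z4 ^ 2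
  + 199992367335497043375000000 * z5 ^ 2
  + 199991658184617015810000000 * z7 ^ 2
  + 199997440396772218170000000 * z8 ^ 2
  + 199997785425875656263000000 * z9 ^ 2
  + 199996876527130844748000000 * z10 ^ 2.

Definition gram_hi_odd_diag (z0 z1 z2 z3 z4 z5 z6 z7 z8 z9 z10 : R) : R :=
  199999988160000000000000000 * z0 ^ 2 + 199999439093501928000000000 * z1 ^ 2
  + 199993555946832643980000000 * z6 ^ 2.

Lemma gram_lo_even_decomp (z0 z1 z2 z3 z4 z5 z6 z7 z8 z9 z10 z11 z12 z13 z14 z15 : R) :
  10 ^ 24 * gram_lo_even z0 z1 z2 z3 z4 z5 z6 z7 z8 z9 z10 z11 z12 z13 z14 z15 =
  gram_lo_even_sos z0 z1 z2 z3 z4 z5 z6 z7 z8 z9 z10 z11 z12 z13 z14 z15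
  + gram_lo_even_diag z0 z1 z2 z3 z4 z5 z6 z7 z8 z9 z10 z11 z12 z13 z14 z15.
Proof. unfold gram_lo_even, gram_lo_even_sos, gram_lo_even_diag. ring. Qed.

Lemma gram_lo_even_nonneg (z0 z1 z2 z3 z4 z5 z6 z7 z8 z9 z10 z11 z12 z13 z14 z15 : R) :
  0 <= gram_lo_even z0 z1 z2 z3 z4 z5 z6 z7 z8 z9 z10 z11 z12 z13 z14 z15.
Proof.
  eapply nonneg_of_scaled_eq_sum; [apply gram_lo_even_decomp | lra | |];
    unfold gram_lo_even_sos, gram_lo_even_diag; weighted_squares_nonneg.
Qed.

Lemma gram_lo_even_eq0 (z0 z1 z2 z3 z4 z5 z6 z7 z8 z9 z10 z11 z12 z13 z14 z15 : R) :
  gram_lo_even z0 z1 z2 z3 z4 z5 z6 z7 z8 z9 z10 z11 z12 z13 z14 z15 = 0 -> z8 = 0.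
Proof.
  intros Hq. eapply nonpos_of_scaled_eq_sum_eq0 in Hq;
    [| apply gram_lo_even_decomp | unfold gram_lo_even_sos; weighted_squares_nonneg].
  unfold gram_lo_even_diag in Hq.
  pose proof (pow2_ge_0 z8).
  apply eq0_of_sq_nonpos; lra.
Qed.

Lemma gram_lo_odd_decomp (z0 z1 z2 z3 z4 z5 z6 z7 z8 z9 z10 : R) :
  10 ^ 24 * gram_lo_odd z0 z1 z2 z3 z4 z5 z6 z7 z8 z9 z10 =
  gram_lo_odd_sos z0 z1 z2 z3 z4 z5 z6 z7 z8 z9 z10
  + gram_lo_odd_diag z0 z1 z2 z3 z4 z5 z6 z7 z8 z9 z10.
Proof. unfold gram_lo_odd, gram_lo_odd_sos, gram_lo_odd_diag. ring. Qed.

Lemma gram_lo_odd_nonneg (z0 z1 z2 z3 z4 z5 z6 z7 z8 z9 z10 : R) :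
  0 <= gram_lo_odd z0 z1 z2 z3 z4 z5 z6 z7 z8 z9 z10.
Proof.
  eapply nonneg_of_scaled_eq_sum; [apply gram_lo_odd_decomp | lra | |];
    unfold gram_lo_odd_sos, gram_lo_odd_diag; weighted_squares_nonneg.
Qed.

Lemma gram_lo_odd_eq0 (z0 z1 z2 z3 z4 z5 z6 z7 z8 z9 z10 : R) :
  gram_lo_odd z0 z1 z2 z3 z4 z5 z6 z7 z8 z9 z10 = 0 -> z0 = 0 /\ z1 = 0 /\ z6 = 0.
Proof.
  intros Hq. eapply nonpos_of_scaled_eq_sum_eq0 in Hq;
    [| apply gram_lo_odd_decomp | unfold gram_lo_odd_sos; weighted_squares_nonneg].
  unfold gram_lo_odd_diag in Hq.
  pose proof (pow2_ge_0 z0). pose proof (pow2_ge_0 z1). pose proof (pow2_ge_0 z6).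
  repeat split; apply eq0_of_sq_nonpos; lra.
Qed.

Lemma gram_hi_even_decomp (z0 z1 z2 z3 z4 z5 z6 z7 z8 z9 z10 z11 z12 z13 z14 z15 : R) :
  10 ^ 24 * gram_hi_even z0 z1 z2 z3 z4 z5 z6 z7 z8 z9 z10 z11 z12 z13 z14 z15 =
  gram_hi_even_sos z0 z1 z2 z3 z4 z5 z6 z7 z8 z9 z10 z11 z12 z13 z14 z15
  + gram_hi_even_diag z0 z1 z2 z3 z4 z5 z6 z7 z8 z9 z10 z11 z12 z13 z14 z15.
Proof. unfold gram_hi_even, gram_hi_even_sos, gram_hi_even_diag. ring. Qed.

Lemma gram_hi_even_nonneg (z0 z1 z2 z3 z4 z5 z6 z7 z8 z9 z10 z11 z12 z13 z14 z15 : R) :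
  0 <= gram_hi_even z0 z1 z2 z3 z4 z5 z6 z7 z8 z9 z10 z11 z12 z13 z14 z15.
Proof.
  eapply nonneg_of_scaled_eq_sum; [apply gram_hi_even_decomp | lra | |];
    unfold gram_hi_even_sos, gram_hi_even_diag; weighted_squares_nonneg.
Qed.

Lemma gram_hi_even_eq0 (z0 z1 z2 z3 z4 z5 z6 z7 z8 z9 z10 z11 z12 z13 z14 z15 : R) :
  gram_hi_even z0 z1 z2 z3 z4 z5 z6 z7 z8 z9 z10 z11 z12 z13 z14 z15 = 0 -> z8 = 0.
Proof.
  intros Hq. eapply nonpos_of_scaled_eq_sum_eq0 in Hq;
    [| apply gram_hi_even_decomp | unfold gram_hi_even_sos; weighted_squares_nonneg].
  unfold gram_hi_even_diag in Hq.
  pose proof (pow2_ge_0 z8).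
  apply eq0_of_sq_nonpos; lra.
Qed.

Lemma gram_hi_odd_decomp (z0 z1 z2 z3 z4 z5 z6 z7 z8 z9 z10 : R) :
  10 ^ 24 * gram_hi_odd z0 z1 z2 z3 z4 z5 z6 z7 z8 z9 z10 =
  gram_hi_odd_sos z0 z1 z2 z3 z4 z5 z6 z7 z8 z9 z10
  + gram_hi_odd_diag z0 z1 z2 z3 z4 z5 z6 z7 z8 z9 z10.
Proof. unfold gram_hi_odd, gram_hi_odd_sos, gram_hi_odd_diag. ring. Qed.

Lemma gram_hi_odd_nonneg (z0 z1 z2 z3 z4 z5 z6 z7 z8 z9 z10 : R) :
  0 <= gram_hi_odd z0 z1 z2 z3 z4 z5 z6 z7 z8 z9 z10.
Proof.
  eapply nonneg_of_scaled_eq_sum; [apply gram_hi_odd_decomp | lra | |];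
    unfold gram_hi_odd_sos, gram_hi_odd_diag; weighted_squares_nonneg.
Qed.

Lemma gram_hi_odd_eq0 (z0 z1 z2 z3 z4 z5 z6 z7 z8 z9 z10 : R) :
  gram_hi_odd z0 z1 z2 z3 z4 z5 z6 z7 z8 z9 z10 = 0 -> z0 = 0 /\ z1 = 0 /\ z6 = 0.
Proof.
  intros Hq. eapply nonpos_of_scaled_eq_sum_eq0 in Hq;
    [| apply gram_hi_odd_decomp | unfold gram_hi_odd_sos; weighted_squares_nonneg].
  unfold gram_hi_odd_diag in Hq.
  pose proof (pow2_ge_0 z0). pose proof (pow2_ge_0 z1). pose proof (pow2_ge_0 z6).
  repeat split; apply eq0_of_sq_nonpos; lra.
Qed.

Lemma lie_form_lo_sos (x y w1 w2 : R) :
  11644879165920000000 * lie_form (1/2) x y w1 w2 =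
  - (547309320798240000000 * gram_lo_even (w1 * y ^ 2) (w1 * x * y) (w1 * x ^ 2)
         (w1 * y ^ 4) (w1 * x * y ^ 3) (w1 * x ^ 2 * y ^ 2) (w1 * x ^ 3 * y) (w1 * x ^ 4)
         (w2 * y ^ 2) (w2 * x * y) (w2 * x ^ 2) (w2 * y ^ 4) (w2 * x * y ^ 3)
         (w2 * x ^ 2 * y ^ 2) (w2 * x ^ 3 * y) (w2 * x ^ 4)
     + 3186675453538625359901990400000000 * gram_lo_odd (w1 * y) (w1 * x) (w1 * y ^ 3)
         (w1 * x * y ^ 2) (w1 * x ^ 2 * y) (w1 * x ^ 3) (w2 * x) (w2 * y ^ 3)
         (w2 * x * y ^ 2) (w2 * x ^ 2 * y) (w2 * x ^ 3)).
Proof. unfold lie_form, gram_lo_even, gram_lo_odd. field. Qed.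

Lemma lie_form_hi_sos (x y w1 w2 : R) :
  145560989574000000000000 * lie_form (547/1000) x y w1 w2 =
  - (273654660399120000000000 * gram_hi_even (w1 * y ^ 2) (w1 * x * y) (w1 * x ^ 2)
         (w1 * y ^ 4) (w1 * x * y ^ 3) (w1 * x ^ 2 * y ^ 2) (w1 * x ^ 3 * y) (w1 * x ^ 4)
         (w2 * y ^ 2) (w2 * x * y) (w2 * x ^ 2) (w2 * y ^ 4) (w2 * x * y ^ 3)
         (w2 * x ^ 2 * y ^ 2) (w2 * x ^ 3 * y) (w2 * x ^ 4)
     + 39833443169232816998774880000000000000 * gram_hi_odd (w1 * y) (w1 * x) (w1 * y ^ 3)
         (w1 * x * y ^ 2) (w1 * x ^ 2 * y) (w1 * x ^ 3) (w2 * x) (w2 * y ^ 3)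
         (w2 * x * y ^ 2) (w2 * x ^ 2 * y) (w2 * x ^ 3)).
Proof. unfold lie_form, gram_hi_even, gram_hi_odd. field. Qed.

Lemma lie_form_lo_nonpos (x y w1 w2 : R) : lie_form (1/2) x y w1 w2 <= 0.
Proof.
  eapply nonpos_of_scaled_eq_neg_sum;
    [apply lie_form_lo_sos | lra | lra | lra |
     apply gram_lo_even_nonneg | apply gram_lo_odd_nonneg].
Qed.

Lemma lie_form_lo_eq0 (x y w1 w2 : R) : lie_form (1/2) x y w1 w2 = 0 ->
  w1 * y = 0 /\ w1 * x = 0 /\ w2 * x = 0 /\ w2 * y ^ 2 = 0.
Proof.
  intros Hq. eapply eq0_of_scaled_eq_neg_sum_eq0 in Hq;
    [| apply lie_form_lo_sos | lra | lra |
     apply gram_lo_even_nonneg | apply gram_lo_odd_nonneg].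
  destruct Hq as [Heven Hodd].
  apply gram_lo_even_eq0 in Heven. apply gram_lo_odd_eq0 in Hodd. tauto.
Qed.

Lemma lie_form_hi_nonpos (x y w1 w2 : R) : lie_form (547/1000) x y w1 w2 <= 0.
Proof.
  eapply nonpos_of_scaled_eq_neg_sum;
    [apply lie_form_hi_sos | lra | lra | lra |
     apply gram_hi_even_nonneg | apply gram_hi_odd_nonneg].
Qed.

Lemma lie_form_hi_eq0 (x y w1 w2 : R) : lie_form (547/1000) x y w1 w2 = 0 ->
  w1 * y = 0 /\ w1 * x = 0 /\ w2 * x = 0 /\ w2 * y ^ 2 = 0.
Proof.
  intros Hq. eapply eq0_of_scaled_eq_neg_sum_eq0 in Hq;
    [| apply lie_form_hi_sos | lra | lra |
     apply gram_hi_even_nonneg | apply gram_hi_odd_nonneg].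
  destruct Hq as [Heven Hodd].
  apply gram_hi_even_eq0 in Heven. apply gram_hi_odd_eq0 in Hodd. tauto.
Qed.

Lemma lie_form_nonpos (m x y w1 w2 : R) :
  1/2 <= m <= 547/1000 -> lie_form m x y w1 w2 <= 0.
Proof.
  intros Hm. pose proof (lie_form_affine m x y w1 w2).
  pose proof (lie_form_lo_nonpos x y w1 w2). pose proof (lie_form_hi_nonpos x y w1 w2).
  nra.
Qed.

Lemma lie_form_eq0 (m x y w1 w2 : R) : 1/2 <= m <= 547/1000 ->
  lie_form m x y w1 w2 = 0 -> (x = 0 /\ y = 0) \/ (w1 = 0 /\ w2 = 0).
Proof.
  intros Hm Hq. pose proof (lie_form_affine m x y w1 w2) as Haff.
  pose proof (lie_form_lo_nonpos x y w1 w2). pose proof (lie_form_hi_nonpos x y w1 w2).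
  destruct (Rlt_le_dec m (547/1000)) as [Hlt | Hge].
  - assert (Hlo : lie_form (1/2) x y w1 w2 = 0) by nra.
    destruct (lie_form_lo_eq0 _ _ _ _ Hlo) as (? & ? & ? & ?).
    apply origin_or_zero_of_products; assumption.
  - assert (Hhi : lie_form (547/1000) x y w1 w2 = 0) by nra.
    destruct (lie_form_hi_eq0 _ _ _ _ Hhi) as (? & ? & ? & ?).
    apply origin_or_zero_of_products; assumption.
Qed.

Lemma lie_nonpos (m : R) : 1/2 <= m <= 547/1000 -> forall x y, lie m x y <= 0.
Proof. intros Hm x y. rewrite lie_eq_lie_form. apply lie_form_nonpos, Hm. Qed.

Lemma lie_eq0_equilibrium (m : R) : 1/2 <= m <= 547/1000 ->
  forall x y, lie m x y = 0 -> is_equilibrium (fP m) (fQ m) (x, y).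
Proof.
  intros Hm x y. rewrite lie_eq_lie_form. intros Hq.
  destruct (lie_form_eq0 m x y _ _ Hm Hq) as [[-> ->] | [HP HQ]].
  - split; simpl; unfold fP, fQ; ring.
  - split; assumption.
Qed.

Theorem proposition6p2 :
  forall m : R, 1 / 2 <= m <= 547 / 1000 ->
    (~ exists G, limit_cycle (fP m) (fQ m) G) /\
    (~ exists C, polycycle (fP m) (fQ m) C).
Proof.
  intros m Hm. split.
  - intros [G [Hper _]].
    exact (lyapunov_no_periodic_orbit (fP m) (fQ m) (lyap m) (lie m)
      (lyap_derive_solution m) (lie_nonpos m Hm) (lie_eq0_equilibrium m Hm) G Hper).
  - intros [C Hpoly].
    exact (lyapunov_no_polycycle (fP m) (fQ m) (lyap m) (lie m) (lyap_continuous m)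
      (lyap_derive_solution m) (lie_nonpos m Hm) (lie_eq0_equilibrium m Hm) C Hpoly).
Qed.
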